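(* In the setting described in the context, assume $\omega_+\neq3\omega_-$, and let $r>0$, $0<\delta<1$ satisfy $$r^2S_*\leq1-\delta.$$ Then $\max_{\|\mathbf z\|\leq r}\|\nabla S\|\leq(1-\delta)r$; consequently $\Phi_{\rm nonres}=\Phi^1_S$ is well defined from $B_{\delta r}$ to $B_r$, and $$\|\Phi_{\rm nonres}(\mathbf z)-\mathbf z\|\leq r^3S_*\ \ (\mathbf z\in B_{\delta r}),\qquad \max_{\|\mathbf z\|\leq\delta r}|R|\leq R_\dagger r^6,$$ where $R:=\mathtt H\circ\Phi_{\rm nonres}-\mathtt N-\bar{\mathtt H}_4$ and $R_\dagger:=\sum_{j=1,2}S^{(j)}\big(2\bar{\mathtt H}_4^{(j)}+\hat{\mathtt G}^{(j)}\big)$ with $\hat{\mathtt G}:=\mathtt G-\bar{\mathtt H}_4$.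
   Context: Let $\mathtt M$ be a real symmetric positive-definite $2\times2$ matrix, $\mathtt K$ a real diagonal positive-definite $2\times 2$ matrix, and $M_3,N_3\in\mathbb R$. Let $\omega_-^2<\omega_+^2$ be the (distinct, positive) eigenvalues of $\mathtt M^{-1}\mathtt K$, $0<\omega_-<\omega_+$, $\boldsymbol\omega:=(\omega_-,\omega_+)$, and let $\mathbf\Phi=\begin{pmatrix}\phi_1^-&\phi_1^+\\ \phi_2^-&\phi_2^+\end{pmatrix}$ be real with $\mathbf\Phi^T\mathtt M\mathbf\Phi=\mathbf I$, $\mathbf\Phi^T\mathtt K\mathbf\Phi=\mathrm{diag}(\omega_-^2,\omega_+^2)$. Let $f(q_1,q_2)=\tfrac14M_3(\phi_1^-q_1+\phi_1^+q_2)^4+\tfrac14N_3(\phi_2^-q_1+\phi_2^+q_2)^4$. On $\mathbb C^2\ni\mathbf z$ set $\mathtt N=\omega_-|z_1|^2+\omega_+|z_2|^2$, $\mathtt G=f\big(\tfrac{z_1+\bar z_1}{\sqrt{2\omega_-}},\tfrac{z_2+\bar z_2}{\sqrt{2\omega_+}}\big)=\sum_{|\boldsymbol\alpha+\boldsymbol\beta|=4}\mathtt G_{\boldsymbol\alpha,\boldsymbol\beta}\mathbf z^{\boldsymbol\alpha}\bar{\mathbf z}^{\boldsymbol\beta}$ ($\boldsymbol\alpha,\boldsymbol\beta\in\mathbb N^2$, $\mathbf z^{\boldsymbol\alpha}=z_1^{\alpha_1}z_2^{\alpha_2}$, $|\boldsymbol\alpha+\boldsymbol\beta|=\alpha_1+\alpha_2+\beta_1+\beta_2$),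 $\mathtt H=\mathtt N+\mathtt G$, $\bar{\mathtt H}_4:=\sum_{|\boldsymbol\alpha|=2}\mathtt G_{\boldsymbol\alpha,\boldsymbol\alpha}|z_1|^{2\alpha_1}|z_2|^{2\alpha_2}$. $S$ is the quartic polynomial with coefficients $S_{\boldsymbol\alpha,\boldsymbol\beta}=\mathrm i\,\mathtt G_{\boldsymbol\alpha,\boldsymbol\beta}/(\boldsymbol\omega\cdot(\boldsymbol\alpha-\boldsymbol\beta))$ for $\boldsymbol\alpha\neq\boldsymbol\beta$, $0$ otherwise; $\Phi^t_S$ is the flow of $\dot z_j=-\mathrm i\partial_{\bar z_j}S$. For a quartic polynomial $P=\sum_{|\boldsymbol\alpha+\boldsymbol\beta|=4}P_{\boldsymbol\alpha,\boldsymbol\beta}\mathbf z^{\boldsymbol\alpha}\bar{\mathbf z}^{\boldsymbol\beta}$, $P^{(j)}:=\sum_{|\boldsymbol\alpha+\boldsymbol\beta|=4}\alpha_j|P_{\boldsymbol\alpha,\boldsymbol\beta}|$ ($j=1,2$) and $P_*:=\max\{P^{(1)},P^{(2)}\}$; in particular $S^{(j)}=\sum_{|\boldsymbol\alpha+\boldsymbol\beta|=4,\boldsymbol\alpha\ne\boldsymbol\beta}\alpha_j|\mathtt G_{\boldsymbol\alpha,\boldsymbol\beta}|/|\boldsymbol\omega\cdot(\boldsymbol\alpha-\boldsymbol\beta)|$ and $S_*=\max\{S^{(1)},S^{(2)}\}$. $\|\mathbf z\|:=\max\{|z_1|,|z_2|\}$, $B_\rho:=\{\|\mathbf z\|\leq\rho\}\subset\mathbb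 C^2$, $\nabla S$ is the gradient with respect to $(\mathbf z,\bar{\mathbf z})$ measured in the max norm. *)

From Stdlib Require Import Reals Lra Lia List Arith.
From Coquelicot Require Import Coquelicot.
Import ListNotations.
Open Scope R_scope.

Definition mat2 := nat -> nat -> R.
Definition mmul (A B : mat2) : mat2 :=
  fun i j => A i 0%nat * B 0%nat j + A i 1%nat * B 1%nat j.
Definition mtr (A : mat2) : mat2 := fun i j => A j i.
Definition mdiag (a b : R) : mat2 :=
  fun i j => if Nat.eqb i j then (if Nat.eqb i 0 then a else b) else 0.
Definition meq (A B : mat2) : Prop :=
  forall i j, (i < 2)%nat -> (j < 2)%nat -> A i j = B i j.
Definition symmetric2 (A : mat2) : Prop := A 0%nat 1%nat = A 1%nat 0%nat.
Definition diagonal2 (A : mat2) : Prop := A 0%nat 1%nat = 0 /\ A 1%nat 0%nat = 0.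
Definition posdef2 (A : mat2) : Prop :=
  forall x0 x1 : R, (x0, x1) <> (0, 0) ->
    0 < x0 * (A 0%nat 0%nat * x0 + A 0%nat 1%nat * x1)
        + x1 * (A 1%nat 0%nat * x0 + A 1%nat 1%nat * x1).
Definition det2 (A : mat2) : R := A 0%nat 0%nat * A 1%nat 1%nat - A 0%nat 1%nat * A 1%nat 0%nat.
Definition inv2 (A : mat2) : mat2 := fun i j =>
  match i, j with
  | O, O => A 1%nat 1%nat / det2 A
  | O, _ => - A 0%nat 1%nat / det2 A
  | _, O => - A 1%nat 0%nat / det2 A
  | _, _ => A 0%nat 0%nat / det2 A
  end.
Definition eigenvalue2 (A : mat2) (lam : R) : Prop :=
  exists v0 v1 : R, (v0, v1) <> (0, 0) /\
    A 0%nat 0%nat * v0 + A 0%nat 1%nat * v1 = lam * v0 /\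
    A 1%nat 0%nat * v0 + A 1%nat 1%nat * v1 = lam * v1.

(** * Quartic polynomials in (z1, z2, conj z1, conj z2)
    A multi-index (alpha, beta) = ((a1,a2),(b1,b2)) is represented by the four
    naturals a1 a2 b1 b2; a quartic polynomial by its coefficient family. *)
Definition qpoly := nat -> nat -> nat -> nat -> C.

Definition quartic_idx : list (nat * nat * nat * nat) :=
  filter (fun '(a1, a2, b1, b2) => Nat.eqb (a1 + a2 + b1 + b2) 4)
    (flat_map (fun a1 => flat_map (fun a2 => flat_map (fun b1 =>
       map (fun b2 => (a1, a2, b1, b2)) (seq 0 5)) (seq 0 5)) (seq 0 5)) (seq 0 5)).

Definition qsumR (F : nat -> nat -> nat -> nat -> R) : R :=
  fold_right Rplus 0 (map (fun '(a1, a2, b1, b2) => F a1 a2 b1 b2) quartic_idx).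
Definition qsumC (F : nat -> nat -> nat -> nat -> C) : C :=
  fold_right Cplus 0%C (map (fun '(a1, a2, b1, b2) => F a1 a2 b1 b2) quartic_idx).

Definition qeval (P : qpoly) (z1 z2 : C) : C :=
  qsumC (fun a1 a2 b1 b2 =>
    (P a1 a2 b1 b2 * z1 ^ a1 * z2 ^ a2 * Cconj z1 ^ b1 * Cconj z2 ^ b2)%C).

Definition dz1 (P : qpoly) (z1 z2 : C) : C :=
  qsumC (fun a1 a2 b1 b2 => (P a1 a2 b1 b2 * RtoC (INR a1)
    * z1 ^ (a1 - 1) * z2 ^ a2 * Cconj z1 ^ b1 * Cconj z2 ^ b2)%C).
Definition dz2 (P : qpoly) (z1 z2 : C) : C :=
  qsumC (fun a1 a2 b1 b2 => (P a1 a2 b1 b2 * RtoC (INR a2)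
    * z1 ^ a1 * z2 ^ (a2 - 1) * Cconj z1 ^ b1 * Cconj z2 ^ b2)%C).
Definition dzb1 (P : qpoly) (z1 z2 : C) : C :=
  qsumC (fun a1 a2 b1 b2 => (P a1 a2 b1 b2 * RtoC (INR b1)
    * z1 ^ a1 * z2 ^ a2 * Cconj z1 ^ (b1 - 1) * Cconj z2 ^ b2)%C).
Definition dzb2 (P : qpoly) (z1 z2 : C) : C :=
  qsumC (fun a1 a2 b1 b2 => (P a1 a2 b1 b2 * RtoC (INR b2)
    * z1 ^ a1 * z2 ^ a2 * Cconj z1 ^ b1 * Cconj z2 ^ (b2 - 1))%C).

Definition cnorm2 (z1 z2 : C) : R := Rmax (Cmod z1) (Cmod z2).
Definition gradnorm (P : qpoly) (z1 z2 : C) : R :=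
  Rmax (Rmax (Cmod (dz1 P z1 z2)) (Cmod (dz2 P z1 z2)))
       (Rmax (Cmod (dzb1 P z1 z2)) (Cmod (dzb2 P z1 z2))).

Definition qnorm1 (P : qpoly) : R := qsumR (fun a1 a2 b1 b2 => INR a1 * Cmod (P a1 a2 b1 b2)).
Definition qnorm2 (P : qpoly) : R := qsumR (fun a1 a2 b1 b2 => INR a2 * Cmod (P a1 a2 b1 b2)).
Definition qstar (P : qpoly) : R := Rmax (qnorm1 P) (qnorm2 P).

(** * The specific Hamiltonian.
    Phi 0 0 = phi_1^-, Phi 0 1 = phi_1^+, Phi 1 0 = phi_2^-, Phi 1 1 = phi_2^+. *)
Definition fpot (Phi : mat2) (M3 N3 : R) (q1 q2 : C) : C :=
  (RtoC (M3 / 4) * (RtoC (Phi 0%nat 0%nat) * q1 + RtoC (Phi 0%nat 1%nat) * q2) ^ 4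
   + RtoC (N3 / 4) * (RtoC (Phi 1%nat 0%nat) * q1 + RtoC (Phi 1%nat 1%nat) * q2) ^ 4)%C.

Definition Gfun (Phi : mat2) (wm wp M3 N3 : R) (z1 z2 : C) : C :=
  fpot Phi M3 N3 ((z1 + Cconj z1) / RtoC (sqrt (2 * wm)))%C
                 ((z2 + Cconj z2) / RtoC (sqrt (2 * wp)))%C.

Definition multinom4 (a1 a2 b1 b2 : nat) : R :=
  INR (fact 4) / INR (fact a1 * fact a2 * fact b1 * fact b2).

(* The coefficients G_{alpha,beta} of G, obtained by multinomial expansion
   (see Gfun_expansion below). *)
Definition Gc (Phi : mat2) (wm wp M3 N3 : R) : qpoly := fun a1 a2 b1 b2 =>
  RtoC (multinom4 a1 a2 b1 b2 *
   (M3 / 4 * (Phi 0%nat 0%nat / sqrt (2 * wm)) ^ (a1 + b1)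
           * (Phi 0%nat 1%nat / sqrt (2 * wp)) ^ (a2 + b2)
  + N3 / 4 * (Phi 1%nat 0%nat / sqrt (2 * wm)) ^ (a1 + b1)
           * (Phi 1%nat 1%nat / sqrt (2 * wp)) ^ (a2 + b2))).

Definition Nfun (wm wp : R) (z1 z2 : C) : C :=
  RtoC (wm * Cmod z1 ^ 2 + wp * Cmod z2 ^ 2).

Definition Hfun (Phi : mat2) (wm wp M3 N3 : R) (z1 z2 : C) : C :=
  (Nfun wm wp z1 z2 + Gfun Phi wm wp M3 N3 z1 z2)%C.

(* bar H_4 = sum_{|alpha|=2} G_{alpha,alpha} |z1|^{2 alpha1} |z2|^{2 alpha2},
   as a quartic polynomial: coefficient G_{alpha,alpha} on (alpha,alpha), 0 else *)
Definition H4bar (Phi : mat2) (wm wp M3 N3 : R) : qpoly := fun a1 a2 b1 b2 =>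
  if andb (Nat.eqb a1 b1) (Nat.eqb a2 b2) then Gc Phi wm wp M3 N3 a1 a2 b1 b2 else 0%C.

Definition Ghat (Phi : mat2) (wm wp M3 N3 : R) : qpoly := fun a1 a2 b1 b2 =>
  (Gc Phi wm wp M3 N3 a1 a2 b1 b2 - H4bar Phi wm wp M3 N3 a1 a2 b1 b2)%C.

Definition wdot (wm wp : R) (a1 a2 b1 b2 : nat) : R :=
  wm * (INR a1 - INR b1) + wp * (INR a2 - INR b2).

Definition Sc (Phi : mat2) (wm wp M3 N3 : R) : qpoly := fun a1 a2 b1 b2 =>
  if andb (Nat.eqb a1 b1) (Nat.eqb a2 b2) then 0%C
  else (Ci * Gc Phi wm wp M3 N3 a1 a2 b1 b2 / RtoC (wdot wm wp a1 a2 b1 b2))%C.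

Definition flow_sol (S : qpoly) (z1 z2 : C) (g1 g2 : R -> C) : Prop :=
  g1 0 = z1 /\ g2 0 = z2 /\
  (forall t, 0 < t < 1 ->
     is_derive g1 t ((- Ci) * dzb1 S (g1 t) (g2 t))%C /\
     is_derive g2 t ((- Ci) * dzb2 S (g1 t) (g2 t))%C) /\
  filterlim g1 (at_right 0) (locally (g1 0)) /\
  filterlim g2 (at_right 0) (locally (g2 0)) /\
  filterlim g1 (at_left 1) (locally (g1 1)) /\
  filterlim g2 (at_left 1) (locally (g2 1)).

Lemma Gfun_expansion (Phi : mat2) (wm wp M3 N3 : R) (z1 z2 : C) :
    0 < wm -> 0 < wp ->
    Gfun Phi wm wp M3 N3 z1 z2 = qeval (Gc Phi wm wp M3 N3) z1 z2.
  Proof.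
    intros Hm Hp.
    assert (s1 : sqrt (2*wm) <> 0) by (apply Rgt_not_eq, sqrt_lt_R0; lra).
    assert (s2 : sqrt (2*wp) <> 0) by (apply Rgt_not_eq, sqrt_lt_R0; lra).
    unfold Gfun, fpot, qeval, qsumC, Gc, multinom4. simpl.
    set (a := sqrt (2*wm)) in *. set (b := sqrt (2*wp)) in *.
    rewrite ?RtoC_mult, ?RtoC_plus, ?RtoC_pow.
    generalize (Cconj z1) (Cconj z2); intros u v.
    rewrite ?RtoC_div, ?RtoC_mult, ?RtoC_plus, ?RtoC_pow.
    assert (a' : RtoC a <> 0%C) by (intro H; apply s1; injection H; auto).
    assert (b' : RtoC b <> 0%C) by (intro H; apply s2; injection H; auto).
    rewrite !RtoC_div.
    all: try (apply not_0_INR; simpl; lia).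
    all: try (apply Rgt_not_eq; apply lt_0_INR; simpl; lia).
    simpl INR.
    field. auto.
    all: first [assumption | lra].
  Qed.

(* The generating function S solves the homological equation: the derivative of the
   normal part N along the Hamiltonian flow of S is -Ghat = -(G - H4bar).  This is possible
   because, for quartic monomials, omega . (alpha - beta) vanishes off the diagonal only when
   omega_+ = 3 omega_-.  A Cauchy-type estimate bounds the Wirtinger derivatives of a quartic
   polynomial P by P^(j) |z|^3; hence on B_r the vector field of S is bounded by
   K = r^3 S_* <= (1 - delta) r, and a solution starting in B_(delta r) cannot leave B_r before
   time 1.  Picard iteration on [0,1] then produces the flow, a Gronwall-type estimate for the
   locally Lipschitz field gives uniqueness, and |Phi^1_S(z) - z| <= K.  Finally
   psi(t) = N + H4bar + t Ghat along the flow satisfies psi' = {H4bar, S} + t {Ghat, S}, while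
   psi(1) - psi(0) = H o Phi^1_S - N - H4bar; each Lie derivative {P, S} is bounded by
   2 (P^(1) S^(1) + P^(2) S^(2)) r^6, and integrating over [0,1] gives R_dagger r^6. *)

From Stdlib Require Import Reals Lra Lia List Arith.
From Coquelicot Require Import Coquelicot.
Open Scope R_scope.

Definition idx := (nat * nat * nat * nat)%type.

Definition lsumC (l : list idx) (F : nat -> nat -> nat -> nat -> C) : C :=
  fold_right Cplus 0%C (map (fun '(a1, a2, b1, b2) => F a1 a2 b1 b2) l).

Definition lsumR (l : list idx) (F : nat -> nat -> nat -> nat -> R) : R :=
  fold_right Rplus 0 (map (fun '(a1, a2, b1, b2) => F a1 a2 b1 b2) l).

Lemma lsumC_cons a1 a2 b1 b2 l F :
  lsumC ((a1, a2, b1, b2) :: l) F = (F a1 a2 b1 b2 + lsumC l F)%C.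
Proof. reflexivity. Qed.

Lemma lsumR_cons a1 a2 b1 b2 l F :
  lsumR ((a1, a2, b1, b2) :: l) F = F a1 a2 b1 b2 + lsumR l F.
Proof. reflexivity. Qed.

Lemma lsumC_ext l F G :
  (forall a1 a2 b1 b2, In (a1, a2, b1, b2) l -> F a1 a2 b1 b2 = G a1 a2 b1 b2) ->
  lsumC l F = lsumC l G.
Proof.
  induction l as [|[[[a1 a2] b1] b2] l IH]; intros H; [reflexivity|].
  rewrite !lsumC_cons, H, IH; auto with datatypes.
Qed.

Lemma lsumR_le l F G :
  (forall a1 a2 b1 b2, In (a1, a2, b1, b2) l -> F a1 a2 b1 b2 <= G a1 a2 b1 b2) ->
  lsumR l F <= lsumR l G.
Proof.
  induction l as [|[[[a1 a2] b1] b2] l IH]; intros H; [apply Rle_refl|].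
  rewrite !lsumR_cons. apply Rplus_le_compat; auto with datatypes.
Qed.

Lemma lsumR_ext l F G :
  (forall a1 a2 b1 b2, In (a1, a2, b1, b2) l -> F a1 a2 b1 b2 = G a1 a2 b1 b2) ->
  lsumR l F = lsumR l G.
Proof. intros H; apply Rle_antisym; apply lsumR_le; intros; rewrite H; auto; lra. Qed.

Lemma lsumR_ge0 l F :
  (forall a1 a2 b1 b2, 0 <= F a1 a2 b1 b2) -> 0 <= lsumR l F.
Proof.
  induction l as [|[[[a1 a2] b1] b2] l IH]; intros H; [apply Rle_refl|].
  rewrite lsumR_cons. apply Rplus_le_le_0_compat; auto.
Qed.

Lemma lsumR_scal_r l c F :
  lsumR l (fun a1 a2 b1 b2 => F a1 a2 b1 b2 * c) = lsumR l F * c.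
Proof.
  induction l as [|[[[a1 a2] b1] b2] l IH]; [cbn; ring|].
  rewrite !lsumR_cons, IH. ring.
Qed.

Lemma lsumC_add l F G :
  lsumC l (fun a1 a2 b1 b2 => F a1 a2 b1 b2 + G a1 a2 b1 b2)%C = (lsumC l F + lsumC l G)%C.
Proof.
  induction l as [|[[[a1 a2] b1] b2] l IH]; [cbn; ring|].
  rewrite !lsumC_cons, IH. ring.
Qed.

Lemma lsumC_scal_l l c F :
  lsumC l (fun a1 a2 b1 b2 => c * F a1 a2 b1 b2)%C = (c * lsumC l F)%C.
Proof.
  induction l as [|[[[a1 a2] b1] b2] l IH]; [cbn; ring|].
  rewrite !lsumC_cons, IH. ring.
Qed.

Lemma lsumC_scal_r l c F :
  lsumC l (fun a1 a2 b1 b2 => F a1 a2 b1 b2 * c)%C = (lsumC l F * c)%C.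
Proof.
  induction l as [|[[[a1 a2] b1] b2] l IH]; [cbn; ring|].
  rewrite !lsumC_cons, IH. ring.
Qed.

Lemma Cconj_lsumC l F :
  Cconj (lsumC l F) = lsumC l (fun a1 a2 b1 b2 => Cconj (F a1 a2 b1 b2)).
Proof.
  induction l as [|[[[a1 a2] b1] b2] l IH].
  - apply injective_projections; simpl; lra.
  - rewrite !lsumC_cons, Cplus_conj, IH. reflexivity.
Qed.

Lemma Cmod_lsumC_le l F :
  Cmod (lsumC l F) <= lsumR l (fun a1 a2 b1 b2 => Cmod (F a1 a2 b1 b2)).
Proof.
  induction l as [|[[[a1 a2] b1] b2] l IH].
  - cbn. rewrite Cmod_0. apply Rle_refl.
  - rewrite lsumC_cons, lsumR_cons. eapply Rle_trans; [apply Cmod_triangle|lra].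
Qed.

Lemma cnorm2_ge0 z1 z2 : 0 <= cnorm2 z1 z2.
Proof. eapply Rle_trans; [apply Cmod_ge_0|apply Rmax_l]. Qed.

Lemma cnorm2_le_l z1 z2 : Cmod z1 <= cnorm2 z1 z2.
Proof. apply Rmax_l. Qed.

Lemma cnorm2_le_r z1 z2 : Cmod z2 <= cnorm2 z1 z2.
Proof. apply Rmax_r. Qed.

Lemma cnorm2_lub z1 z2 x : Cmod z1 <= x -> Cmod z2 <= x -> cnorm2 z1 z2 <= x.
Proof. apply Rmax_lub. Qed.

Lemma cnorm2_triangle z1 z2 w1 w2 :
  cnorm2 (z1 + w1) (z2 + w2) <= cnorm2 z1 z2 + cnorm2 w1 w2.
Proof.
  apply cnorm2_lub; (eapply Rle_trans; [apply Cmod_triangle|apply Rplus_le_compat]);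
    auto using cnorm2_le_l, cnorm2_le_r.
Qed.

Lemma cnorm2_0 : cnorm2 0 0 = 0.
Proof. unfold cnorm2. rewrite Cmod_0. apply Rmax_left, Rle_refl. Qed.

Lemma cnorm2_sub_le0_eq (a1 a2 b1 b2 : C) : cnorm2 (a1 - b1) (a2 - b2) <= 0 -> a1 = b1 /\ a2 = b2.
Proof.
  intros H. pose proof (cnorm2_le_l (a1 - b1) (a2 - b2)).
  pose proof (cnorm2_le_r (a1 - b1) (a2 - b2)).
  pose proof (Cmod_ge_0 (a1 - b1)). pose proof (Cmod_ge_0 (a2 - b2)).
  assert (E1 : (a1 - b1)%C = RtoC 0) by (apply Cmod_eq_0; lra).
  assert (E2 : (a2 - b2)%C = RtoC 0) by (apply Cmod_eq_0; lra).
  split; [replace a1 with ((a1 - b1) + b1)%C by ring|replace a2 with ((a2 - b2) + b2)%C by ring];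
    [rewrite E1|rewrite E2]; ring.
Qed.

Lemma cnorm2_le_of_sub_le (w1 w2 z1 z2 : C) d : cnorm2 (w1 - z1) (w2 - z2) <= d ->
  cnorm2 w1 w2 <= cnorm2 z1 z2 + d.
Proof.
  intros H. replace w1 with (z1 + (w1 - z1))%C by ring. replace w2 with (z2 + (w2 - z2))%C by ring.
  eapply Rle_trans; [apply cnorm2_triangle|lra].
Qed.

Lemma cnorm2_sub_sym (a1 a2 b1 b2 : C) : cnorm2 (a1 - b1) (a2 - b2) = cnorm2 (b1 - a1) (b2 - a2).
Proof.
  unfold cnorm2. replace (a1 - b1)%C with (- (b1 - a1))%C by ring.
  replace (a2 - b2)%C with (- (b2 - a2))%C by ring. now rewrite !Cmod_opp.
Qed.

Lemma cnorm2_sub_triangle (a1 a2 b1 b2 c1 c2 : C) :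
  cnorm2 (a1 - c1) (a2 - c2) <= cnorm2 (a1 - b1) (a2 - b2) + cnorm2 (b1 - c1) (b2 - c2).
Proof.
  replace (a1 - c1)%C with ((a1 - b1) + (b1 - c1))%C by ring.
  replace (a2 - c2)%C with ((a2 - b2) + (b2 - c2))%C by ring. apply cnorm2_triangle.
Qed.

Lemma Cmod_mult_le (a b : C) A B : Cmod a <= A -> Cmod b <= B -> Cmod (a * b) <= A * B.
Proof.
  intros Ha Hb. rewrite Cmod_mult.
  apply Rmult_le_compat; auto using Cmod_ge_0.
Qed.

Lemma is_derive_Re (h : R -> C) t l :
  is_derive h t l -> is_derive (fun s => fst (h s)) t (fst l).
Proof.
  intros H. eapply filterdiff_ext_lin.
  - apply (filterdiff_comp' h fst t _ fst H), filterdiff_linear, is_linear_fst.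
  - reflexivity.
Qed.

Lemma is_derive_Im (h : R -> C) t l :
  is_derive h t l -> is_derive (fun s => snd (h s)) t (snd l).
Proof.
  intros H. eapply filterdiff_ext_lin.
  - apply (filterdiff_comp' h snd t _ snd H), filterdiff_linear, is_linear_snd.
  - reflexivity.
Qed.

Lemma is_derive_C (h : R -> C) t l :
  is_derive (fun s => fst (h s)) t (fst l) -> is_derive (fun s => snd (h s)) t (snd l) ->
  is_derive h t l.
Proof.
  intros H1 H2. apply (is_derive_ext (fun s => (fst (h s), snd (h s)) : C)).
  { intros s. now destruct (h s). }
  destruct l as [a b]. eapply filterdiff_ext_lin.
  - apply (filterdiff_comp'_2 _ _ (fun x y => (x, y) : C) t _ _ (fun x y => (x, y) : C) H1 H2).
    eapply filterdiff_ext; [|eapply filterdiff_ext_lin; [apply filterdiff_id|]];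
      intros [x y]; reflexivity.
  - reflexivity.
Qed.

Lemma is_derive_Cconst (c : C) t : is_derive (fun _ : R => c) t (RtoC 0).
Proof.
  apply is_derive_C; [exact (is_derive_const (fst c) t)|exact (is_derive_const (snd c) t)].
Qed.

Lemma is_derive_RtoC_id t : is_derive (fun s : R => RtoC s) t (RtoC 1).
Proof. apply is_derive_C; [exact (is_derive_id t)|exact (is_derive_const 0 t)]. Qed.

Lemma is_derive_Req (f : R -> R) t (l l' : R) :
  is_derive f t l -> l = l' -> is_derive f t l'.
Proof. now intros H <-. Qed.

Lemma is_derive_Ceq (f : R -> C) t (l l' : C) :
  is_derive f t l -> l = l' -> is_derive f t l'.
Proof. now intros H <-. Qed.

Lemma is_derive_Cplus (f g : R -> C) t a b :
  is_derive f t a -> is_derive g t b -> is_derive (fun s => f s + g s)%C t (a + b)%C.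
Proof. exact (is_derive_plus f g t a b). Qed.

Lemma is_derive_Cmult (f g : R -> C) t a b :
  is_derive f t a -> is_derive g t b ->
  is_derive (fun s => f s * g s)%C t (a * g t + f t * b)%C.
Proof.
  intros Hf Hg.
  pose proof (is_derive_Re _ _ _ Hf) as F1. pose proof (is_derive_Im _ _ _ Hf) as F2.
  pose proof (is_derive_Re _ _ _ Hg) as G1. pose proof (is_derive_Im _ _ _ Hg) as G2.
  apply is_derive_C; eapply is_derive_Req.
  - exact (is_derive_minus _ _ _ _ _ (is_derive_mult _ _ _ _ _ F1 G1 Rmult_comm)
             (is_derive_mult _ _ _ _ _ F2 G2 Rmult_comm)).
  - unfold minus, plus, opp, mult; simpl; ring.
  - exact (is_derive_plus _ _ _ _ _ (is_derive_mult _ _ _ _ _ F1 G2 Rmult_comm)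
             (is_derive_mult _ _ _ _ _ F2 G1 Rmult_comm)).
  - unfold plus, mult; simpl; ring.
Qed.

Lemma is_derive_Cscal (c : C) (f : R -> C) t a :
  is_derive f t a -> is_derive (fun s => c * f s)%C t (c * a)%C.
Proof.
  intros Hf. eapply is_derive_Ceq; [exact (is_derive_Cmult _ f t _ a (is_derive_Cconst c t) Hf)|].
  cbv beta; ring.
Qed.

Lemma is_derive_Cconj (f : R -> C) t a :
  is_derive f t a -> is_derive (fun s => Cconj (f s)) t (Cconj a).
Proof.
  intros Hf. apply is_derive_C; [exact (is_derive_Re _ _ _ Hf)|].
  exact (is_derive_opp _ _ _ (is_derive_Im _ _ _ Hf)).
Qed.

Lemma is_derive_Cpow (f : R -> C) t a n :
  is_derive f t a -> is_derive (fun s => f s ^ n)%C t (RtoC (INR n) * f t ^ (n - 1) * a)%C.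
Proof.
  intros Hf. induction n as [|n IH].
  - eapply is_derive_Ceq; [exact (is_derive_Cconst (RtoC 1) t)|]. simpl; ring.
  - eapply is_derive_Ceq; [exact (is_derive_Cmult f _ t a _ Hf IH)|].
    rewrite S_INR, RtoC_plus. destruct n as [|n]; [simpl; ring|].
    replace (S (S n) - 1)%nat with (S n) by lia. replace (S n - 1)%nat with n by lia.
    change (f t ^ S n)%C with (f t * f t ^ n)%C. ring.
Qed.

Lemma is_derive_lin (c t : R) : is_derive (fun s => c * s) t c.
Proof. auto_derive; auto. ring. Qed.

Lemma is_derive_pow_fact (c : R) n t :
  is_derive (fun s => c * s ^ S n / INR (fact (S n))) t (c * t ^ n / INR (fact n)).
Proof.
  pose proof (INR_fact_neq_0 n). pose proof (INR_fact_neq_0 (S n)).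
  auto_derive; auto.
  change (match n with 0%nat => 1 | S _ => INR n + 1 end) with (INR (S n)).
  change (fact n + n * fact n)%nat with (fact (S n)).
  rewrite fact_simpl, mult_INR. field. split; auto. apply not_0_INR. lia.
Qed.

Definition RIntC (f : R -> C) (a b : R) : C := @RInt C_R_CompleteNormedModule f a b.

Lemma is_derive_RIntC (f : R -> C) (c : C) t :
  (forall s, continuous f s) -> is_derive (fun s => c + RIntC f 0 s)%C t (f t).
Proof.
  intros Hf.
  assert (H : is_derive (fun b => RIntC f 0 b) t (f t)).
  { apply (@is_derive_RInt C_R_NormedModule f (fun b => RIntC f 0 b) 0 t); [|apply Hf].
    exists (mkposreal 1 Rlt_0_1). intros b _.
    apply (@RInt_correct C_R_CompleteNormedModule), (@ex_RInt_continuous C_R_CompleteNormedModule).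
    intros s _. apply Hf. }
  eapply is_derive_Ceq; [exact (is_derive_Cplus _ _ _ _ _ (is_derive_Cconst c t) H)|]. ring.
Qed.

Lemma RIntC_point (f : R -> C) a : RIntC f a a = RtoC 0.
Proof. unfold RIntC. rewrite RInt_point. reflexivity. Qed.

(** * The mean value inequality *)

Lemma filterlim_C_Cmod {T : Type} {F : (T -> Prop) -> Prop} {FF : Filter F} (f : T -> C) l :
  filterlim f F (locally l) <-> forall eps : posreal, F (fun x => Cmod (f x - l) < eps).
Proof. exact (filterlim_locally_ball_norm (K := C_AbsRing) (U := C_NormedModule) f l). Qed.

Lemma Rmult_lt_of_le_div L x eps : 0 <= L -> 0 <= x -> 0 < eps -> x <= eps / (L + 1) -> L * x < eps.
Proof. intros HL Hx He H. apply Rle_div_r in H; [nra|lra]. Qed.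

Lemma continuous_C_of_lipschitz (h : R -> C) K t :
  (forall s, Cmod (h s - h t) <= K * Rabs (s - t)) -> continuous h t.
Proof.
  intros Hh. apply filterlim_C_Cmod. intros eps.
  assert (Hd : 0 < eps / (Rabs K + 1)).
  { apply Rdiv_lt_0_compat; [apply cond_pos|pose proof (Rabs_pos K); lra]. }
  exists (mkposreal _ Hd). intros s Hs. change (Rabs (s - t) < eps / (Rabs K + 1)) in Hs.
  eapply Rle_lt_trans; [apply Hh|]. eapply Rle_lt_trans; [apply Rmult_le_compat_r, Rle_abs|].
  - apply Rabs_pos.
  - apply Rmult_lt_of_le_div; auto using Rabs_pos, cond_pos; lra.
Qed.

Lemma filterlim_at_right_of_continuous {U : UniformSpace} (f : R -> U) a :
  continuous f a -> filterlim f (at_right a) (locally (f a)).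
Proof. apply filterlim_filter_le_1, filter_le_within. Qed.

Lemma filterlim_at_left_of_continuous {U : UniformSpace} (f : R -> U) a :
  continuous f a -> filterlim f (at_left a) (locally (f a)).
Proof. apply filterlim_filter_le_1, filter_le_within. Qed.

Lemma derive_nonpos_le (k dk : R -> R) a b : a < b ->
  (forall t, a < t < b -> is_derive k t (dk t)) -> (forall t, a < t < b -> dk t <= 0) ->
  filterlim k (at_right a) (locally (k a)) -> filterlim k (at_left b) (locally (k b)) ->
  k b <= k a.
Proof.
  intros Hab Hd Hneg Ha Hb.
  assert (Hint : forall x y, a < x -> x <= y -> y < b -> k y <= k x).
  { intros x y Hx Hxy Hy. destruct (MVT_gen k x y dk) as [c [Hc E]].
    - intros u Hu. rewrite Rmin_left, Rmax_right in Hu by lra. apply Hd. lra.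
    - intros u Hu. rewrite Rmin_left, Rmax_right in Hu by lra.
      apply continuity_pt_filterlim, (ex_derive_continuous k u). exists (dk u). apply Hd. lra.
    - rewrite Rmin_left, Rmax_right in Hc by lra. specialize (Hneg c ltac:(lra)). nra. }
  assert (Hleft : forall y, a < y < b -> k y <= k a).
  { intros y Hy. apply (filterlim_le (F := at_right a) (fun _ => k y) k (k y) (k a)); auto.
    - assert (Hd' : 0 < y - a) by lra. exists (mkposreal _ Hd').
      intros x Hx Hax. change (Rabs (x - a) < y - a) in Hx. apply Rabs_def2 in Hx.
      apply Hint; lra.
    - apply filterlim_const. }
  apply (filterlim_le (F := at_left b) k (fun _ => k a) (k b) (k a)); auto.
  - assert (Hd' : 0 < b - a) by lra. exists (mkposreal _ Hd').
    intros x Hx Hxb. change (Rabs (x - b) < b - a) in Hx. apply Rabs_def2 in Hx.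
    apply Hleft; lra.
  - apply filterlim_const.
Qed.

Lemma filterlim_Re_mul_minus {F : (R -> Prop) -> Prop} {FF : Filter F}
  (h : R -> C) (phi : R -> R) (c : C) (m : R) x0 :
  filterlim h F (locally (h x0)) -> filterlim phi F (locally (phi x0)) ->
  filterlim (fun t => fst (c * h t)%C - m * phi t) F (locally (fst (c * h x0)%C - m * phi x0)).
Proof.
  intros Hh Hphi. apply filterlim_locally. intros eps.
  set (M := Cmod c + Rabs m).
  assert (HM : 0 <= M) by (pose proof (Cmod_ge_0 c); pose proof (Rabs_pos m); unfold M; lra).
  assert (Hd : 0 < eps / (M + 1)) by (apply Rdiv_lt_0_compat; [apply cond_pos|lra]).
  generalize (filter_and _ _ (proj1 (filterlim_C_Cmod h _) Hh (mkposreal _ Hd))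
                             (proj1 (filterlim_locally phi _) Hphi (mkposreal _ Hd))).
  apply filter_imp. intros t [D1 D2]. simpl in D1.
  change (Rabs (phi t - phi x0) < eps / (M + 1)) in D2.
  change (Rabs (fst (c * h t)%C - m * phi t - (fst (c * h x0)%C - m * phi x0)) < eps).
  replace (fst (c * h t)%C - m * phi t - (fst (c * h x0)%C - m * phi x0))
    with (fst (c * (h t - h x0))%C + - (m * (phi t - phi x0))) by (simpl; ring).
  eapply Rle_lt_trans; [apply Rabs_triang|]. rewrite Rabs_Ropp, Rabs_mult.
  pose proof (re_le_Cmod (c * (h t - h x0))) as Hre. rewrite Cmod_mult in Hre.
  pose proof (Cmod_ge_0 c). pose proof (Rabs_pos m).
  assert (Cmod c * Cmod (h t - h x0) <= Cmod c * (eps / (M + 1))) by (apply Rmult_le_compat_l; lra).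
  assert (Rabs m * Rabs (phi t - phi x0) <= Rabs m * (eps / (M + 1)))
    by (apply Rmult_le_compat_l; lra).
  assert (M * (eps / (M + 1)) < eps) by (apply Rmult_lt_of_le_div; auto using cond_pos; lra).
  unfold Re in Hre. unfold M in *. lra.
Qed.

Definition cont_at_ends (h : R -> C) (a b : R) : Prop :=
  filterlim h (at_right a) (locally (h a)) /\ filterlim h (at_left b) (locally (h b)).

Definition has_derive_on (h D : R -> C) (a b : R) : Prop :=
  (forall t, a < t < b -> is_derive h t (D t)) /\ cont_at_ends h a b.

Lemma has_derive_on_of_derive (h D : R -> C) a b : a <= b ->
  (forall t, a <= t <= b -> is_derive h t (D t)) -> has_derive_on h D a b.
Proof.
  intros Hab Hd. split; [intros t Ht; apply Hd; lra|].
  split; [apply filterlim_at_right_of_continuous|apply filterlim_at_left_of_continuous];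
    apply (ex_derive_continuous h); eexists; apply Hd; lra.
Qed.

Lemma filterlim_Cminus {T : Type} {F : (T -> Prop) -> Prop} {FF : Filter F} (f g : T -> C) a b :
  filterlim f F (locally a) -> filterlim g F (locally b) ->
  filterlim (fun x => f x - g x)%C F (locally (a - b)%C).
Proof.
  intros Hf Hg. apply filterlim_C_Cmod. intros eps.
  assert (He : 0 < eps / 2) by (pose proof (cond_pos eps); lra).
  generalize (filter_and _ _ (proj1 (filterlim_C_Cmod f a) Hf (mkposreal _ He))
                             (proj1 (filterlim_C_Cmod g b) Hg (mkposreal _ He))).
  apply filter_imp. intros x [D1 D2]. simpl in D1, D2.
  replace (f x - g x - (a - b))%C with ((f x - a) - (g x - b))%C by ring.
  eapply Rle_lt_trans; [apply Cmod_triangle|]. rewrite Cmod_opp. lra.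
Qed.

Lemma has_derive_on_minus (f g Df Dg : R -> C) a b :
  has_derive_on f Df a b -> has_derive_on g Dg a b ->
  has_derive_on (fun t => f t - g t)%C (fun t => Df t - Dg t)%C a b.
Proof.
  intros [Hf [Hfa Hfb]] [Hg [Hga Hgb]].
  split; [intros t Ht; exact (is_derive_minus _ _ _ _ _ (Hf t Ht) (Hg t Ht))|].
  split; apply filterlim_Cminus; auto.
Qed.

Lemma Cmod_sub_le_of_derive (h D : R -> C) (phi dphi : R -> R) a b : a <= b ->
  has_derive_on h D a b -> (forall t, is_derive phi t (dphi t)) ->
  (forall t, a < t < b -> Cmod (D t) <= dphi t) ->
  Cmod (h b - h a) <= phi b - phi a.
Proof.
  intros Hab [Hd [Ha Hb]] Hphi HD.
  destruct (Req_dec a b) as [<-|Hne].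
  { replace (h a - h a)%C with (RtoC 0) by ring. rewrite Cmod_0. lra. }
  assert (Hcont : forall x, continuous phi x).
  { intros x. apply (ex_derive_continuous phi). exists (dphi x). apply Hphi. }
  (* Used with [c = 0] (monotonicity of [phi]) and with [c = Cconj (h b - h a)]. *)
  assert (Hk : forall c m, Cmod c <= m ->
            fst (c * h b)%C - m * phi b <= fst (c * h a)%C - m * phi a).
  { intros c m Hcm.
    apply (derive_nonpos_le (fun t => fst (c * h t)%C - m * phi t)
                            (fun t => fst (c * D t)%C - m * dphi t)); [lra| | | |].
    - intros t Ht. exact (is_derive_minus _ _ _ _ _
        (is_derive_Re _ _ _ (is_derive_Cscal c h t _ (Hd t Ht)))
        (is_derive_scal phi t m _ (Hphi t))).
    - intros t Ht. pose proof (HD t Ht). pose proof (Cmod_ge_0 (D t)).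
      assert (Hre : fst (c * D t)%C <= m * dphi t).
      { eapply Rle_trans; [apply Rle_abs|]. eapply Rle_trans; [apply re_le_Cmod|].
        rewrite Cmod_mult. apply Rmult_le_compat; auto using Cmod_ge_0. }
      lra.
    - apply filterlim_Re_mul_minus; auto using filterlim_at_right_of_continuous.
    - apply filterlim_Re_mul_minus; auto using filterlim_at_left_of_continuous. }
  pose proof (Hk (RtoC 0) 1 ltac:(rewrite Cmod_0; lra)) as Hmono. simpl in Hmono.
  set (v := (h b - h a)%C).
  pose proof (Hk (Cconj v) (Cmod v) ltac:(rewrite Cmod_conj; lra)) as Hv.
  assert (Ev : fst (Cconj v * h b)%C - fst (Cconj v * h a)%C = Cmod v ^ 2).
  { rewrite Cmod2_alt. unfold v, Re, Im; simpl. ring. }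
  replace (Cmod v ^ 2) with (Cmod v * Cmod v) in Ev by ring.
  assert (Hsq : Cmod v * Cmod v <= Cmod v * (phi b - phi a)).
  { replace (Cmod v * (phi b - phi a)) with (Cmod v * phi b - Cmod v * phi a) by ring. lra. }
  pose proof (Cmod_ge_0 v).
  destruct (Rle_or_lt (Cmod v) (phi b - phi a)) as [|Hlt]; [assumption|].
  assert (Cmod v * (phi b - phi a) < Cmod v * Cmod v) by (apply Rmult_lt_compat_l; lra).
  lra.
Qed.

Lemma cnorm2_sub_le_of_derive (h1 h2 D1 D2 : R -> C) (phi dphi : R -> R) a b : a <= b ->
  has_derive_on h1 D1 a b -> has_derive_on h2 D2 a b -> (forall t, is_derive phi t (dphi t)) ->
  (forall t, a < t < b -> cnorm2 (D1 t) (D2 t) <= dphi t) ->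
  cnorm2 (h1 b - h1 a) (h2 b - h2 a) <= phi b - phi a.
Proof.
  intros Hab H1 H2 Hphi HD.
  apply cnorm2_lub; eapply Cmod_sub_le_of_derive; eauto; intros t Ht;
    (eapply Rle_trans; [|apply (HD t Ht)]); auto using cnorm2_le_l, cnorm2_le_r.
Qed.

Lemma cnorm2_sub_curves_le (u1 u2 w1 w2 Du1 Du2 Dw1 Dw2 : R -> C) (phi dphi : R -> R) t :
  0 <= t -> u1 0 = w1 0 -> u2 0 = w2 0 ->
  has_derive_on u1 Du1 0 t -> has_derive_on u2 Du2 0 t ->
  has_derive_on w1 Dw1 0 t -> has_derive_on w2 Dw2 0 t ->
  (forall s, is_derive phi s (dphi s)) ->
  (forall s, 0 < s < t -> cnorm2 (Du1 s - Dw1 s) (Du2 s - Dw2 s) <= dphi s) ->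
  cnorm2 (u1 t - w1 t) (u2 t - w2 t) <= phi t - phi 0.
Proof.
  intros Ht E1 E2 Hu1 Hu2 Hw1 Hw2 Hphi HD.
  replace (u1 t - w1 t)%C with ((u1 t - w1 t) - (u1 0 - w1 0))%C by (rewrite E1; ring).
  replace (u2 t - w2 t)%C with ((u2 t - w2 t) - (u2 0 - w2 0))%C by (rewrite E2; ring).
  apply (cnorm2_sub_le_of_derive (fun s => u1 s - w1 s)%C (fun s => u2 s - w2 s)%C
           (fun s => Du1 s - Dw1 s)%C (fun s => Du2 s - Dw2 s)%C phi dphi);
    auto using has_derive_on_minus.
Qed.

Definition clamp (a b t : R) : R := Rmax a (Rmin b t).

Lemma clamp_id a b t : a <= t <= b -> clamp a b t = t.
Proof. intros. unfold clamp, Rmax, Rmin. repeat destruct Rle_dec; lra. Qed.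

Lemma clamp_in a b t : a <= b -> a <= clamp a b t <= b.
Proof. intros. unfold clamp, Rmax, Rmin. repeat destruct Rle_dec; lra. Qed.

Lemma Rabs_clamp_sub_le a b s t : a <= b -> Rabs (clamp a b s - clamp a b t) <= Rabs (s - t).
Proof.
  intros. unfold clamp, Rmax, Rmin, Rabs. repeat destruct Rle_dec; repeat destruct Rcase_abs; lra.
Qed.

Lemma continuous_clamp (h : R -> C) a b x : a < b -> a <= x <= b ->
  (forall t, a < t < b -> continuous h t) -> cont_at_ends h a b ->
  continuous (fun t => h (clamp a b t)) x.
Proof.
  intros Hab Hx Hint [Ha Hb].
  unfold continuous. rewrite (clamp_id a b x Hx). apply filterlim_C_Cmod. intros eps.
  assert (Hcl : forall t, clamp a b t = a \/ clamp a b t = b \/ (a < t < b /\ clamp a b t = t)).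
  { intros t. unfold clamp, Rmax, Rmin. repeat destruct Rle_dec; lra. }
  destruct (Rle_lt_or_eq_dec a x (proj1 Hx)) as [Hax | <-];
    [destruct (Rle_lt_or_eq_dec x b (proj2 Hx)) as [Hxb | ->]|].
  - assert (Hloc : locally x (fun t => a < t < b)).
    { apply (locally_interval _ x a b); simpl; auto. }
    generalize (filter_and _ _ Hloc (proj1 (filterlim_C_Cmod h _) (Hint x (conj Hax Hxb)) eps)).
    apply filter_imp. intros t [Ht Hd]. now rewrite clamp_id by lra.
  - assert (Hloc : locally b (fun t => a < t)).
    { apply (locally_interval _ b a p_infty); simpl; auto. }
    generalize (filter_and _ _ Hloc (proj1 (filterlim_C_Cmod h _) Hb eps)).
    apply filter_imp. intros t [Hat Hd].
    destruct (Hcl t) as [E|[E|[Ht E]]]; rewrite E.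
    + exfalso. revert E. unfold clamp, Rmax, Rmin. repeat destruct Rle_dec; lra.
    + replace (h b - h b)%C with (RtoC 0) by ring. rewrite Cmod_0. apply cond_pos.
    + apply Hd; lra.
  - assert (Hloc : locally a (fun t => t < b)).
    { apply (locally_interval _ a m_infty b); simpl; auto. }
    generalize (filter_and _ _ Hloc (proj1 (filterlim_C_Cmod h _) Ha eps)).
    apply filter_imp. intros t [Htb Hd].
    destruct (Hcl t) as [E|[E|[Ht E]]]; rewrite E.
    + replace (h a - h a)%C with (RtoC 0) by ring. rewrite Cmod_0. apply cond_pos.
    + exfalso. revert E. unfold clamp, Rmax, Rmin. repeat destruct Rle_dec; lra.
    + apply Hd; lra.
Qed.

Lemma bounded_of_cont_at_ends (h : R -> C) a b :
  (forall t, a < t < b -> continuous h t) -> cont_at_ends h a b ->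
  exists M, forall t, a <= t <= b -> Cmod (h t) <= M.
Proof.
  intros Hint Hends. destruct (Rlt_or_le a b) as [Hab|Hba].
  - destruct (bounded_continuity (K := C_AbsRing) (V := C_NormedModule)
                (fun t => h (clamp a b t)) a b) as [M HM].
    { intros x Hx. apply continuous_clamp; auto. }
    exists M. intros t Ht. specialize (HM t Ht). simpl in HM. rewrite clamp_id in HM by exact Ht.
    now left.
  - exists (Cmod (h a)). intros t Ht. replace t with a by lra. apply Rle_refl.
Qed.

Lemma le_of_le_half_pow x a c N :
  (forall n, (N <= n)%nat -> x <= a + c * (1/2) ^ n) -> x <= a.
Proof.
  intros H. destruct (Rle_or_lt c 0) as [Hc|Hc].
  { specialize (H N (le_n N)). pose proof (pow_le (1/2) N ltac:(lra)). nra. }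
  apply Rnot_lt_le. intros Hlt.
  destruct (pow_lt_1_zero (1/2) ltac:(rewrite Rabs_right; lra) ((x - a) / c)) as [M HM].
  { apply Rdiv_lt_0_compat; lra. }
  specialize (HM (max N M) ltac:(lia)). specialize (H (max N M) ltac:(lia)).
  rewrite Rabs_right in HM by (apply Rle_ge, pow_le; lra).
  apply (Rmult_lt_compat_l c) in HM; [|exact Hc].
  replace (c * ((x - a) / c)) with (x - a) in HM by (field; lra). lra.
Qed.

Lemma half_pow_le n m : (n <= m)%nat -> (1/2) ^ m <= (1/2) ^ n.
Proof.
  intros Hnm. induction Hnm as [|m Hnm IH]; [lra|].
  simpl. pose proof (pow_le (1/2) m ltac:(lra)). lra.
Qed.

Lemma pow_div_fact_le_half_pow L :
  exists N, forall n, (N <= n)%nat -> Rabs (L ^ n / INR (fact n)) <= (1/2) ^ n.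
Proof.
  destruct (cv_speed_pow_fact (2 * L) 1 Rlt_0_1) as [N HN].
  exists N. intros n Hn. specialize (HN n Hn). unfold R_dist in HN.
  rewrite Rminus_0_r, Rpow_mult_distr in HN.
  assert (P2 : 0 < 2 ^ n) by (apply pow_lt; lra).
  assert (E : (1/2) ^ n * 2 ^ n = 1)
    by (rewrite <- Rpow_mult_distr; replace (1/2*2) with 1 by field; apply pow1).
  replace (2 ^ n * L ^ n / INR (fact n)) with (2 ^ n * (L ^ n / INR (fact n))) in HN
    by (unfold Rdiv; ring).
  rewrite Rabs_mult, (Rabs_right (2 ^ n)) in HN by lra.
  apply Rmult_le_reg_r with (2 ^ n); auto. rewrite E. lra.
Qed.

Lemma le_0_of_le_pow_fact x M L : (forall n, x <= M * (L ^ n / INR (fact n))) -> x <= 0.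
Proof.
  intros H. destruct (pow_div_fact_le_half_pow L) as [N HN].
  apply (le_of_le_half_pow x 0 (Rabs M) N). intros n Hn.
  eapply Rle_trans; [apply H|]. rewrite Rplus_0_l.
  eapply Rle_trans; [apply Rle_abs|]. rewrite Rabs_mult.
  apply Rmult_le_compat_l; [apply Rabs_pos|auto].
Qed.

Definition climit (u : nat -> C) : C :=
  iota (T := CompleteNormedModule.CompleteSpace _ C_CompleteNormedModule)
    (fun l => filterlim u eventually (locally l)).

Section GeometricSequences.
Variables (u : nat -> C) (N : nat) (c : R).
Hypothesis Hu : forall n, (N <= n)%nat -> Cmod (u (S n) - u n) <= c * (1/2) ^ n.

Lemma geometric_rate_ge0 : 0 <= c.
Proof.
  pose proof (Cmod_ge_0 (u (S N) - u N)). specialize (Hu N (le_n N)).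
  pose proof (pow_lt (1/2) N ltac:(lra)). nra.
Qed.

Lemma geometric_tail_le n m : (N <= n)%nat -> (n <= m)%nat -> Cmod (u m - u n) <= 2 * c * (1/2) ^ n.
Proof.
  intros Hn Hm. pose proof geometric_rate_ge0 as Hc.
  enough (Cmod (u m - u n) <= 2 * c * (1/2) ^ n - 2 * c * (1/2) ^ m).
  { pose proof (pow_le (1/2) m ltac:(lra)). nra. }
  induction Hm as [|m Hm IH].
  - replace (u n - u n)%C with (RtoC 0) by ring. rewrite Cmod_0. lra.
  - replace (u (S m) - u n)%C with ((u (S m) - u m) + (u m - u n))%C by ring.
    eapply Rle_trans; [apply Cmod_triangle|]. specialize (Hu m ltac:(lia)). simpl pow. lra.
Qed.

Lemma filterlim_climit_geometric : filterlim u eventually (locally (climit u)).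
Proof.
  destruct (proj1 (filterlim_locally_cauchy (U := C_CompleteNormedModule) (F := eventually) u))
    as [l Hl].
  - intros eps. pose proof geometric_rate_ge0 as Hc.
    destruct (pow_lt_1_zero (1/2) ltac:(rewrite Rabs_right; lra) (eps / (2 * c + 1))) as [M HM];
      [apply Rdiv_lt_0_compat; [apply cond_pos|lra]|].
    set (M' := max N M). specialize (HM M' ltac:(unfold M'; lia)).
    rewrite Rabs_right in HM by (apply Rle_ge, pow_le; lra).
    assert (Hs : 2 * c * (1/2) ^ M' < eps)
      by (apply Rmult_lt_of_le_div; [lra|apply pow_le; lra|apply cond_pos|lra]).
    exists (fun n => (M' <= n)%nat). split; [exists M'; auto|].
    intros m n Hm Hn. apply (norm_compat1 (V := C_NormedModule)). change (Cmod (u n - u m) < eps).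
    destruct (Nat.le_ge_cases m n) as [Hmn|Hnm].
    + eapply Rle_lt_trans; [apply geometric_tail_le; unfold M' in *; lia|].
      eapply Rle_lt_trans; [|exact Hs]. apply Rmult_le_compat_l, half_pow_le; lra || lia.
    + replace (u n - u m)%C with (- (u m - u n))%C by ring. rewrite Cmod_opp.
      eapply Rle_lt_trans; [apply geometric_tail_le; unfold M' in *; lia|].
      eapply Rle_lt_trans; [|exact Hs]. apply Rmult_le_compat_l, half_pow_le; lra || lia.
  - replace (climit u) with l; [exact Hl|].
    symmetry. exact (iota_filterlim_locally (K := C_AbsRing) (V := C_CompleteNormedModule) u l Hl).
Qed.

Lemma climit_geometric n : (N <= n)%nat -> Cmod (climit u - u n) <= 2 * c * (1/2) ^ n.
Proof.
  intros Hn. apply Rle_plus_epsilon. intros eps Heps.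
  destruct (proj1 (filterlim_C_Cmod u _) filterlim_climit_geometric (mkposreal _ Heps)) as [M HM].
  specialize (HM (max n M) ltac:(lia)). simpl in HM.
  replace (climit u - u n)%C with (- (u (max n M) - climit u) + (u (max n M) - u n))%C by ring.
  eapply Rle_trans; [apply Cmod_triangle|]. rewrite Cmod_opp.
  pose proof (geometric_tail_le n (max n M) Hn ltac:(lia)). lra.
Qed.

End GeometricSequences.

Definition loc_lipschitz (f : C -> C -> C) : Prop :=
  forall rho, exists L, 0 <= L /\ forall z1 z2 w1 w2,
    cnorm2 z1 z2 <= rho -> cnorm2 w1 w2 <= rho ->
    Cmod (f z1 z2 - f w1 w2) <= L * cnorm2 (z1 - w1) (z2 - w2).

Lemma loc_lipschitz_bounded f rho :
  loc_lipschitz f -> exists M, 0 <= M /\ forall z1 z2, cnorm2 z1 z2 <= rho -> Cmod (f z1 z2) <= M.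
Proof.
  intros Hf. destruct (Rle_or_lt 0 rho) as [Hr|Hr].
  - destruct (Hf rho) as [L [HL Lf]].
    exists (Cmod (f 0 0) + L * rho). split; [pose proof (Cmod_ge_0 (f 0 0)); nra|].
    intros z1 z2 Hz. rewrite <- cnorm2_0 in Hr.
    pose proof (Lf z1 z2 0 0 Hz Hr) as Hd.
    replace (z1 - 0)%C with z1 in Hd by ring. replace (z2 - 0)%C with z2 in Hd by ring.
    replace (f z1 z2) with (f 0 0 + (f z1 z2 - f 0 0))%C by ring.
    eapply Rle_trans; [apply Cmod_triangle|].
    apply Rplus_le_compat_l. eapply Rle_trans; [exact Hd|]. now apply Rmult_le_compat_l.
  - exists 0. split; [lra|]. intros z1 z2 Hz. pose proof (cnorm2_ge0 z1 z2). lra.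
Qed.

Lemma loc_lipschitz_const c : loc_lipschitz (fun _ _ => c).
Proof.
  intros rho. exists 0. split; [lra|]. intros.
  replace (c - c)%C with (RtoC 0) by ring. rewrite Cmod_0. lra.
Qed.

Lemma loc_lipschitz_fst : loc_lipschitz (fun z1 _ => z1).
Proof.
  intros rho. exists 1. split; [lra|]. intros. rewrite Rmult_1_l. apply cnorm2_le_l.
Qed.

Lemma loc_lipschitz_snd : loc_lipschitz (fun _ z2 => z2).
Proof.
  intros rho. exists 1. split; [lra|]. intros. rewrite Rmult_1_l. apply cnorm2_le_r.
Qed.

Lemma loc_lipschitz_conj f : loc_lipschitz f -> loc_lipschitz (fun z1 z2 => Cconj (f z1 z2)).
Proof.
  intros Hf rho. destruct (Hf rho) as [L [HL Lf]]. exists L. split; [exact HL|].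
  intros. rewrite <- Cminus_conj, Cmod_conj. auto.
Qed.

Lemma loc_lipschitz_add f g :
  loc_lipschitz f -> loc_lipschitz g -> loc_lipschitz (fun z1 z2 => f z1 z2 + g z1 z2)%C.
Proof.
  intros Hf Hg rho. destruct (Hf rho) as [Lf [HLf Df]], (Hg rho) as [Lg [HLg Dg]].
  exists (Lf + Lg). split; [lra|]. intros z1 z2 w1 w2 Hz Hw.
  replace (f z1 z2 + g z1 z2 - (f w1 w2 + g w1 w2))%C
    with ((f z1 z2 - f w1 w2) + (g z1 z2 - g w1 w2))%C by ring.
  eapply Rle_trans; [apply Cmod_triangle|].
  specialize (Df _ _ _ _ Hz Hw). specialize (Dg _ _ _ _ Hz Hw). lra.
Qed.

Lemma loc_lipschitz_mul f g :
  loc_lipschitz f -> loc_lipschitz g -> loc_lipschitz (fun z1 z2 => f z1 z2 * g z1 z2)%C.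
Proof.
  intros Hf Hg rho.
  destruct (Hf rho) as [Lf [HLf Df]], (Hg rho) as [Lg [HLg Dg]].
  destruct (loc_lipschitz_bounded f rho Hf) as [Mf [HMf Bf]].
  destruct (loc_lipschitz_bounded g rho Hg) as [Mg [HMg Bg]].
  exists (Mf * Lg + Lf * Mg). split; [nra|]. intros z1 z2 w1 w2 Hz Hw.
  replace (f z1 z2 * g z1 z2 - f w1 w2 * g w1 w2)%C
    with (f z1 z2 * (g z1 z2 - g w1 w2) + (f z1 z2 - f w1 w2) * g w1 w2)%C by ring.
  eapply Rle_trans; [apply Cmod_triangle|]. rewrite !Cmod_mult.
  specialize (Df _ _ _ _ Hz Hw). specialize (Dg _ _ _ _ Hz Hw).
  specialize (Bf _ _ Hz). specialize (Bg _ _ Hw).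
  pose proof (Cmod_ge_0 (f z1 z2)). pose proof (Cmod_ge_0 (g w1 w2)).
  pose proof (Cmod_ge_0 (g z1 z2 - g w1 w2)). pose proof (Cmod_ge_0 (f z1 z2 - f w1 w2)).
  pose proof (cnorm2_ge0 (z1 - w1) (z2 - w2)).
  assert (Cmod (f z1 z2) * Cmod (g z1 z2 - g w1 w2) <= Mf * (Lg * cnorm2 (z1 - w1) (z2 - w2)))
    by (apply Rmult_le_compat; auto).
  assert (Cmod (f z1 z2 - f w1 w2) * Cmod (g w1 w2) <= Lf * cnorm2 (z1 - w1) (z2 - w2) * Mg)
    by (apply Rmult_le_compat; auto).
  nra.
Qed.

Lemma loc_lipschitz_pow f n : loc_lipschitz f -> loc_lipschitz (fun z1 z2 => f z1 z2 ^ n)%C.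
Proof.
  intros Hf. induction n as [|n IH].
  - exact (loc_lipschitz_const 1).
  - exact (loc_lipschitz_mul f _ Hf IH).
Qed.

Lemma loc_lipschitz_lsumC l (F : nat -> nat -> nat -> nat -> C -> C -> C) :
  (forall a1 a2 b1 b2, loc_lipschitz (F a1 a2 b1 b2)) ->
  loc_lipschitz (fun z1 z2 => lsumC l (fun a1 a2 b1 b2 => F a1 a2 b1 b2 z1 z2)).
Proof.
  intros HF. induction l as [|[[[a1 a2] b1] b2] l IH].
  - exact (loc_lipschitz_const 0).
  - exact (loc_lipschitz_add _ _ (HF a1 a2 b1 b2) IH).
Qed.

Lemma continuous_loc_lipschitz f (y1 y2 : R -> C) t :
  loc_lipschitz f -> continuous y1 t -> continuous y2 t -> continuous (fun s => f (y1 s) (y2 s)) t.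
Proof.
  intros Hf H1 H2. destruct (Hf (cnorm2 (y1 t) (y2 t) + 1)) as [L [HL Lf]].
  apply filterlim_C_Cmod. intros eps.
  assert (Hd : 0 < Rmin 1 (eps / (L + 1))).
  { apply Rmin_pos; [lra|apply Rdiv_lt_0_compat; [apply cond_pos|lra]]. }
  pose proof (Rmin_l 1 (eps / (L + 1))). pose proof (Rmin_r 1 (eps / (L + 1))).
  generalize (filter_and _ _ (proj1 (filterlim_C_Cmod y1 _) H1 (mkposreal _ Hd))
                             (proj1 (filterlim_C_Cmod y2 _) H2 (mkposreal _ Hd))).
  apply filter_imp. intros s [D1 D2]. simpl in D1, D2.
  assert (Hs : cnorm2 (y1 s - y1 t) (y2 s - y2 t) < Rmin 1 (eps / (L + 1)))
    by (apply Rmax_lub_lt; auto).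
  assert (Bs : cnorm2 (y1 s) (y2 s) <= cnorm2 (y1 t) (y2 t) + 1)
    by (apply cnorm2_le_of_sub_le; lra).
  eapply Rle_lt_trans; [apply Lf; [exact Bs|pose proof (cnorm2_ge0 (y1 t) (y2 t)); lra]|].
  apply Rmult_lt_of_le_div; [exact HL|apply cnorm2_ge0|apply cond_pos|lra].
Qed.

(** * Existence and uniqueness of the flow *)

(* [flow_sol S] is [ode_sol (ham1 S) (ham2 S)] up to conversion. *)
Definition ode_sol (F1 F2 : C -> C -> C) (z1 z2 : C) (g1 g2 : R -> C) : Prop :=
  g1 0 = z1 /\ g2 0 = z2 /\
  (forall t, 0 < t < 1 ->
     is_derive g1 t (F1 (g1 t) (g2 t)) /\ is_derive g2 t (F2 (g1 t) (g2 t))) /\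
  filterlim g1 (at_right 0) (locally (g1 0)) /\
  filterlim g2 (at_right 0) (locally (g2 0)) /\
  filterlim g1 (at_left 1) (locally (g1 1)) /\
  filterlim g2 (at_left 1) (locally (g2 1)).

Section ODE.

Variables F1 F2 : C -> C -> C.
Hypotheses (HF1 : loc_lipschitz F1) (HF2 : loc_lipschitz F2).

Lemma field_lipschitz rho : exists L, 0 <= L /\ forall z1 z2 w1 w2,
  cnorm2 z1 z2 <= rho -> cnorm2 w1 w2 <= rho ->
  cnorm2 (F1 z1 z2 - F1 w1 w2) (F2 z1 z2 - F2 w1 w2) <= L * cnorm2 (z1 - w1) (z2 - w2).
Proof.
  destruct (HF1 rho) as [L1 [HL1 D1]], (HF2 rho) as [L2 [HL2 D2]].
  exists (L1 + L2). split; [lra|]. intros z1 z2 w1 w2 Hz Hw.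
  pose proof (cnorm2_ge0 (z1 - w1) (z2 - w2)).
  specialize (D1 _ _ _ _ Hz Hw). specialize (D2 _ _ _ _ Hz Hw).
  apply cnorm2_lub; nra.
Qed.

Lemma has_derive_on_ode_sol z1 z2 g1 g2 t : ode_sol F1 F2 z1 z2 g1 g2 -> 0 < t <= 1 ->
  has_derive_on g1 (fun s => F1 (g1 s) (g2 s)) 0 t /\
  has_derive_on g2 (fun s => F2 (g1 s) (g2 s)) 0 t.
Proof.
  intros (_ & _ & Hd & H1a & H2a & H1b & H2b) Ht.
  assert (Hleft : forall g D : R -> C, (forall s, 0 < s < 1 -> is_derive g s (D s)) ->
            filterlim g (at_left 1) (locally (g 1)) -> filterlim g (at_left t) (locally (g t))).
  { intros g D HgD Hg1. destruct (Rle_lt_or_eq_dec t 1 (proj2 Ht)) as [Hlt | ->]; [|exact Hg1].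
    apply filterlim_at_left_of_continuous, (ex_derive_continuous g). exists (D t). apply HgD. lra. }
  split; (split; [|split]).
  - intros s Hs. apply Hd. lra.
  - exact H1a.
  - apply (Hleft g1 (fun s => F1 (g1 s) (g2 s))); [intros s Hs; apply Hd, Hs|exact H1b].
  - intros s Hs. apply Hd. lra.
  - exact H2a.
  - apply (Hleft g2 (fun s => F2 (g1 s) (g2 s))); [intros s Hs; apply Hd, Hs|exact H2b].
Qed.

Lemma ode_sol_bounded z1 z2 g1 g2 : ode_sol F1 F2 z1 z2 g1 g2 ->
  exists rho, forall t, 0 <= t <= 1 -> cnorm2 (g1 t) (g2 t) <= rho.
Proof.
  intros Hg. destruct (has_derive_on_ode_sol _ _ _ _ 1 Hg ltac:(lra)) as [[D1 E1] [D2 E2]].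
  assert (Hc : forall g D : R -> C, (forall s, 0 < s < 1 -> is_derive g s (D s)) ->
             forall s, 0 < s < 1 -> continuous g s).
  { intros g D HgD s Hs. apply (ex_derive_continuous g). exists (D s). auto. }
  destruct (bounded_of_cont_at_ends g1 0 1 (Hc _ _ D1) E1) as [M1 HM1].
  destruct (bounded_of_cont_at_ends g2 0 1 (Hc _ _ D2) E2) as [M2 HM2].
  exists (Rmax M1 M2). intros t Ht. apply cnorm2_lub.
  - eapply Rle_trans; [apply HM1, Ht|apply Rmax_l].
  - eapply Rle_trans; [apply HM2, Ht|apply Rmax_r].
Qed.

Section Gronwall.

Variables (z1 z2 : C) (g1 g2 h1 h2 : R -> C) (rho L : R).
Hypotheses (Hg : ode_sol F1 F2 z1 z2 g1 g2) (Hh : ode_sol F1 F2 z1 z2 h1 h2)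
  (Bg : forall t, 0 <= t <= 1 -> cnorm2 (g1 t) (g2 t) <= rho)
  (Bh : forall t, 0 <= t <= 1 -> cnorm2 (h1 t) (h2 t) <= rho)
  (HL : 0 <= L)
  (Lip : forall w1 w2 v1 v2, cnorm2 w1 w2 <= rho -> cnorm2 v1 v2 <= rho ->
     cnorm2 (F1 w1 w2 - F1 v1 v2) (F2 w1 w2 - F2 v1 v2) <= L * cnorm2 (w1 - v1) (w2 - v2)).

Lemma ode_sol_dist_le n t : 0 <= t <= 1 ->
  cnorm2 (h1 t - g1 t) (h2 t - g2 t) <= 2 * rho * L ^ n * t ^ n / INR (fact n).
Proof.
  revert t. induction n as [|n IH]; intros t Ht.
  - replace (2 * rho * L ^ 0 * t ^ 0 / INR (fact 0)) with (rho + rho) by (simpl; field).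
    replace (h1 t - g1 t)%C with (h1 t + - g1 t)%C by ring.
    replace (h2 t - g2 t)%C with (h2 t + - g2 t)%C by ring.
    eapply Rle_trans; [apply cnorm2_triangle|]. unfold cnorm2 at 2. rewrite !Cmod_opp.
    specialize (Bg t Ht). specialize (Bh t Ht). unfold cnorm2 in *. lra.
  - destruct Hg as [G1 [G2 _]], Hh as [H1 [H2 _]].
    destruct (Req_dec t 0) as [->|Ht0].
    { rewrite G1, G2, H1, H2. replace (z1 - z1)%C with (RtoC 0) by ring.
      replace (z2 - z2)%C with (RtoC 0) by ring.
      rewrite cnorm2_0. simpl. unfold Rdiv. rewrite !Rmult_0_l, !Rmult_0_r. lra. }
    set (c := 2 * rho * L ^ S n).
    destruct (has_derive_on_ode_sol _ _ _ _ t Hh ltac:(lra)) as [Dh1 Dh2].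
    destruct (has_derive_on_ode_sol _ _ _ _ t Hg ltac:(lra)) as [Dg1 Dg2].
    eapply Rle_trans.
    { apply (cnorm2_sub_curves_le h1 h2 g1 g2 _ _ _ _ (fun s => c * s ^ S n / INR (fact (S n)))
               (fun s => c * s ^ n / INR (fact n)) t ltac:(lra) ltac:(congruence) ltac:(congruence)
               Dh1 Dh2 Dg1 Dg2 (is_derive_pow_fact c n)).
      intros s Hs. eapply Rle_trans; [apply Lip; [apply Bh|apply Bg]; lra|].
      replace (c * s ^ n / INR (fact n)) with (L * (2 * rho * L ^ n * s ^ n / INR (fact n)))
        by (unfold c; simpl; field; apply INR_fact_neq_0).
      apply Rmult_le_compat_l; [exact HL|apply IH; lra]. }
    unfold c. rewrite pow_i by lia. unfold Rdiv. rewrite Rmult_0_r, Rmult_0_l, Rminus_0_r.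
    apply Req_le. ring.
Qed.

End Gronwall.

Lemma ode_sol_unique (z1 z2 : C) (g1 g2 h1 h2 : R -> C) :
  ode_sol F1 F2 z1 z2 g1 g2 -> ode_sol F1 F2 z1 z2 h1 h2 ->
  forall t, 0 <= t <= 1 -> h1 t = g1 t /\ h2 t = g2 t.
Proof.
  intros Hg Hh.
  destruct (ode_sol_bounded _ _ _ _ Hg) as [rg Bg], (ode_sol_bounded _ _ _ _ Hh) as [rh Bh].
  destruct (field_lipschitz (Rmax rg rh)) as [L [HL Lip]].
  assert (Hdist := ode_sol_dist_le z1 z2 g1 g2 h1 h2 (Rmax rg rh) L Hg Hh
           (fun t Ht => Rle_trans _ _ _ (Bg t Ht) (Rmax_l rg rh))
           (fun t Ht => Rle_trans _ _ _ (Bh t Ht) (Rmax_r rg rh)) HL Lip).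
  intros t Ht. apply cnorm2_sub_le0_eq, (le_0_of_le_pow_fact _ (2 * Rmax rg rh) (L * t)). intros n.
  rewrite Rpow_mult_distr. eapply Rle_trans; [apply (Hdist n t Ht)|].
  apply Req_le. unfold Rdiv. ring.
Qed.

Section Picard.

Variables (z1 z2 : C) (r K : R).
Hypotheses (HK : 0 <= K) (Hz : cnorm2 z1 z2 + K <= r)
  (HFK : forall w1 w2, cnorm2 w1 w2 <= r -> cnorm2 (F1 w1 w2) (F2 w1 w2) <= K).

Lemma in_ball_of_near (w1 w2 : C) t : 0 <= t <= 1 -> cnorm2 (w1 - z1) (w2 - z2) <= K * t ->
  cnorm2 w1 w2 <= r.
Proof.
  intros Ht Hw. apply cnorm2_le_of_sub_le in Hw.
  assert (K * t <= K) by (rewrite <- (Rmult_1_r K) at 2; apply Rmult_le_compat_l; lra). lra.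
Qed.

Fixpoint picard (n : nat) : R -> C * C :=
  match n with
  | O => fun _ => (z1, z2)
  | S n => fun t =>
      ((z1 + RIntC (fun s => F1 (fst (picard n s)) (snd (picard n s))) 0 t)%C,
       (z2 + RIntC (fun s => F2 (fst (picard n s)) (snd (picard n s))) 0 t)%C)
  end.

Lemma picard_0 n : picard n 0 = (z1, z2).
Proof. destruct n; [reflexivity|]. simpl. now rewrite !RIntC_point, !Cplus_0_r. Qed.

Lemma continuous_picard n t :
  continuous (fun s => fst (picard n s)) t /\ continuous (fun s => snd (picard n s)) t.
Proof.
  revert t. induction n as [|n IH]; intros t; [split; apply continuous_const|].
  assert (HF : forall F, loc_lipschitz F ->
            forall s, continuous (fun u => F (fst (picard n u)) (snd (picard n u))) s).
  { intros F HF s. destruct (IH s) as [C1 C2]. exact (continuous_loc_lipschitz F _ _ s HF C1 C2). }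
  split.
  - apply (ex_derive_continuous (fun s => fst (picard (S n) s))).
    eexists. exact (is_derive_RIntC _ z1 t (HF F1 HF1)).
  - apply (ex_derive_continuous (fun s => snd (picard (S n) s))).
    eexists. exact (is_derive_RIntC _ z2 t (HF F2 HF2)).
Qed.

Lemma is_derive_picard n t :
  is_derive (fun s => fst (picard (S n) s)) t (F1 (fst (picard n t)) (snd (picard n t))) /\
  is_derive (fun s => snd (picard (S n) s)) t (F2 (fst (picard n t)) (snd (picard n t))).
Proof.
  assert (HF : forall F, loc_lipschitz F ->
            forall s, continuous (fun u => F (fst (picard n u)) (snd (picard n u))) s).
  { intros F HF s. destruct (continuous_picard n s) as [C1 C2].
    exact (continuous_loc_lipschitz F _ _ s HF C1 C2). }
  split; [exact (is_derive_RIntC _ z1 t (HF F1 HF1))|exact (is_derive_RIntC _ z2 t (HF F2 HF2))].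
Qed.

Lemma has_derive_on_picard n a b : a <= b ->
  has_derive_on (fun s => fst (picard (S n) s))
    (fun s => F1 (fst (picard n s)) (snd (picard n s))) a b /\
  has_derive_on (fun s => snd (picard (S n) s))
    (fun s => F2 (fst (picard n s)) (snd (picard n s))) a b.
Proof.
  intros Hab. split; apply has_derive_on_of_derive; auto; intros t _; apply is_derive_picard.
Qed.

Lemma picard_lipschitz n s t : 0 <= s <= t -> t <= 1 ->
  cnorm2 (fst (picard n t) - fst (picard n s)) (snd (picard n t) - snd (picard n s))
    <= K * t - K * s.
Proof.
  revert s t. induction n as [|n IH]; intros s t Hs Ht.
  - simpl. replace (z1 - z1)%C with (RtoC 0) by ring. replace (z2 - z2)%C with (RtoC 0) by ring.
    rewrite cnorm2_0. assert (K * s <= K * t) by (apply Rmult_le_compat_l; lra). lra.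
  - destruct (has_derive_on_picard n s t (proj2 Hs)) as [D1 D2].
    apply (cnorm2_sub_le_of_derive (fun u => fst (picard (S n) u)) (fun u => snd (picard (S n) u))
             _ _ (fun u => K * u) (fun _ => K) s t (proj2 Hs) D1 D2 (is_derive_lin K)).
    intros u Hu. apply HFK, (in_ball_of_near _ _ u); [lra|].
    specialize (IH 0 u ltac:(lra) ltac:(lra)). rewrite picard_0 in IH. simpl in IH. lra.
Qed.

Lemma picard_in_ball n t : 0 <= t <= 1 -> cnorm2 (fst (picard n t)) (snd (picard n t)) <= r.
Proof.
  intros Ht. apply (in_ball_of_near _ _ t Ht).
  pose proof (picard_lipschitz n 0 t ltac:(lra) ltac:(lra)) as H.
  rewrite picard_0 in H. simpl in H. lra.
Qed.

Lemma picard_succ_dist : exists L, 0 <= L /\ forall n t, 0 <= t <= 1 ->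
  cnorm2 (fst (picard (S n) t) - fst (picard n t)) (snd (picard (S n) t) - snd (picard n t))
    <= K * L ^ n * t ^ S n / INR (fact (S n)).
Proof.
  destruct (field_lipschitz r) as [L [HL Lip]]. exists L. split; [exact HL|].
  induction n as [|n IH]; intros t Ht.
  - replace (K * L ^ 0 * t ^ 1 / INR (fact 1)) with (K * t - K * 0) by (simpl; field).
    pose proof (picard_lipschitz 1 0 t ltac:(lra) ltac:(lra)) as H.
    now rewrite (picard_0 1) in H.
  - set (c := K * L ^ S n).
    destruct (has_derive_on_picard (S n) 0 t (proj1 Ht)) as [Du1 Du2].
    destruct (has_derive_on_picard n 0 t (proj1 Ht)) as [Dw1 Dw2].
    assert (E : picard (S (S n)) 0 = picard (S n) 0) by now rewrite !picard_0.
    eapply Rle_trans.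
    { apply (cnorm2_sub_curves_le _ _ _ _ _ _ _ _
               (fun s => c * s ^ S (S n) / INR (fact (S (S n))))
               (fun s => c * s ^ S n / INR (fact (S n))) t (proj1 Ht)
               (f_equal fst E) (f_equal snd E) Du1 Du2 Dw1 Dw2 (is_derive_pow_fact c (S n))).
      intros s Hs. eapply Rle_trans; [apply Lip; apply picard_in_ball; lra|].
      replace (c * s ^ S n / INR (fact (S n))) with (L * (K * L ^ n * s ^ S n / INR (fact (S n))))
        by (unfold c; change (L ^ S n) with (L * L ^ n); field; apply INR_fact_neq_0).
      apply Rmult_le_compat_l; [exact HL|apply IH; lra]. }
    rewrite pow_i by lia. unfold Rdiv. rewrite Rmult_0_r, Rmult_0_l, Rminus_0_r. apply Req_le.
    unfold c. ring.
Qed.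

Lemma picard_cauchy : exists N, forall n, (N <= n)%nat -> forall t, 0 <= t <= 1 ->
  cnorm2 (fst (picard (S n) t) - fst (picard n t)) (snd (picard (S n) t) - snd (picard n t))
    <= K * (1/2) ^ n.
Proof.
  destruct picard_succ_dist as [L [HL Hd]]. destruct (pow_div_fact_le_half_pow L) as [N HN].
  exists N. intros n Hn t Ht. eapply Rle_trans; [apply Hd, Ht|].
  assert (Hfact : / INR (fact (S n)) <= / INR (fact n)).
  { apply Rinv_le_contravar; [apply INR_fact_lt_0|apply le_INR; rewrite fact_simpl; nia]. }
  assert (Ht1 : 0 <= t ^ S n <= 1).
  { split; [apply pow_le; lra|rewrite <- (pow1 (S n)); apply pow_incr; lra]. }
  assert (H0 : 0 <= / INR (fact (S n))) by (left; apply Rinv_0_lt_compat, INR_fact_lt_0).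
  assert (HLn : 0 <= L ^ n) by (apply pow_le, HL).
  unfold Rdiv. rewrite !Rmult_assoc. apply Rmult_le_compat_l; [exact HK|].
  eapply Rle_trans; [|eapply Rle_trans; [apply Rle_abs|apply (HN n Hn)]].
  unfold Rdiv. apply Rmult_le_compat_l; [exact HLn|]. nra.
Qed.

(* Sampling the iterates at [clamp 0 1 t] makes the limit Lipschitz on all of [R]. *)
Definition picard_lim (t : R) : C * C :=
  (climit (fun n => fst (picard n (clamp 0 1 t))), climit (fun n => snd (picard n (clamp 0 1 t)))).

Lemma picard_lim_approx : exists N, forall n, (N <= n)%nat -> forall t,
  cnorm2 (fst (picard_lim t) - fst (picard n (clamp 0 1 t)))
         (snd (picard_lim t) - snd (picard n (clamp 0 1 t)))
    <= 2 * K * (1/2) ^ n.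
Proof.
  destruct picard_cauchy as [N HN]. exists N. intros n Hn t.
  pose proof (clamp_in 0 1 t ltac:(lra)) as Hc.
  apply cnorm2_lub.
  - apply (climit_geometric (fun m => fst (picard m (clamp 0 1 t))) N K); auto.
    intros m Hm. eapply Rle_trans; [apply cnorm2_le_l|apply (HN m Hm _ Hc)].
  - apply (climit_geometric (fun m => snd (picard m (clamp 0 1 t))) N K); auto.
    intros m Hm. eapply Rle_trans; [apply cnorm2_le_r|apply (HN m Hm _ Hc)].
Qed.

Lemma picard_lim_lipschitz s t :
  cnorm2 (fst (picard_lim t) - fst (picard_lim s)) (snd (picard_lim t) - snd (picard_lim s))
    <= K * Rabs (t - s).
Proof.
  destruct picard_lim_approx as [N HN].
  apply (le_of_le_half_pow _ _ (4 * K) N). intros n Hn.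
  pose proof (clamp_in 0 1 t ltac:(lra)). pose proof (clamp_in 0 1 s ltac:(lra)).
  assert (Hp : cnorm2 (fst (picard n (clamp 0 1 t)) - fst (picard n (clamp 0 1 s)))
                      (snd (picard n (clamp 0 1 t)) - snd (picard n (clamp 0 1 s)))
               <= K * Rabs (t - s)).
  { eapply Rle_trans; [|apply Rmult_le_compat_l; [exact HK|apply (Rabs_clamp_sub_le 0 1); lra]].
    destruct (Rle_or_lt (clamp 0 1 s) (clamp 0 1 t)).
    - rewrite Rabs_right by lra. rewrite Rmult_minus_distr_l. apply picard_lipschitz; lra.
    - rewrite Rabs_left, cnorm2_sub_sym by lra.
      replace (K * - (clamp 0 1 t - clamp 0 1 s)) with (K * clamp 0 1 s - K * clamp 0 1 t) by ring.
      apply picard_lipschitz; lra. }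
  specialize (HN n Hn). pose proof (HN t). pose proof (HN s).
  set (pt := picard n (clamp 0 1 t)) in *. set (ps := picard n (clamp 0 1 s)) in *.
  eapply Rle_trans; [apply (cnorm2_sub_triangle _ _ (fst pt) (snd pt))|].
  eapply Rle_trans; [apply Rplus_le_compat_l, (cnorm2_sub_triangle _ _ (fst ps) (snd ps))|].
  rewrite (cnorm2_sub_sym (fst ps)). lra.
Qed.

Lemma picard_lim_0 : picard_lim 0 = (z1, z2).
Proof.
  destruct picard_lim_approx as [N HN].
  assert (H : cnorm2 (fst (picard_lim 0) - z1) (snd (picard_lim 0) - z2) <= 0).
  { apply (le_of_le_half_pow _ _ (2 * K) N). intros n Hn.
    specialize (HN n Hn 0). rewrite clamp_id, picard_0 in HN by lra. cbn [fst snd] in HN. lra. }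
  destruct (cnorm2_sub_le0_eq _ _ _ _ H) as [E1 E2].
  now rewrite <- E1, <- E2, <- surjective_pairing.
Qed.

Lemma picard_lim_near t : 0 <= t <= 1 ->
  cnorm2 (fst (picard_lim t) - z1) (snd (picard_lim t) - z2) <= K * t.
Proof.
  intros Ht. pose proof (picard_lim_lipschitz 0 t) as H.
  now rewrite picard_lim_0, Rminus_0_r, Rabs_right in H by lra.
Qed.

Lemma continuous_picard_lim t :
  continuous (fun s => fst (picard_lim s)) t /\ continuous (fun s => snd (picard_lim s)) t.
Proof.
  split; apply (continuous_C_of_lipschitz _ K); intros s;
    (eapply Rle_trans; [|apply picard_lim_lipschitz]); [apply cnorm2_le_l|apply cnorm2_le_r].
Qed.

(* One Picard step applied to the limit: showing that it returns the limit avoids exchanging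
   limit and integral. *)
Definition picard_step_lim (t : R) : C * C :=
  ((z1 + RIntC (fun s => F1 (fst (picard_lim s)) (snd (picard_lim s))) 0 t)%C,
   (z2 + RIntC (fun s => F2 (fst (picard_lim s)) (snd (picard_lim s))) 0 t)%C).

Lemma is_derive_picard_step_lim t :
  is_derive (fun s => fst (picard_step_lim s)) t (F1 (fst (picard_lim t)) (snd (picard_lim t))) /\
  is_derive (fun s => snd (picard_step_lim s)) t (F2 (fst (picard_lim t)) (snd (picard_lim t))).
Proof.
  assert (HF : forall F, loc_lipschitz F ->
            forall s, continuous (fun u => F (fst (picard_lim u)) (snd (picard_lim u))) s).
  { intros F HF s. destruct (continuous_picard_lim s) as [C1 C2].
    exact (continuous_loc_lipschitz F _ _ s HF C1 C2). }
  split; [exact (is_derive_RIntC _ z1 t (HF F1 HF1))|exact (is_derive_RIntC _ z2 t (HF F2 HF2))].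
Qed.

Lemma picard_step_lim_sub_le n L e t : 0 <= t <= 1 -> 0 <= L ->
  (forall w1 w2 v1 v2, cnorm2 w1 w2 <= r -> cnorm2 v1 v2 <= r ->
     cnorm2 (F1 w1 w2 - F1 v1 v2) (F2 w1 w2 - F2 v1 v2) <= L * cnorm2 (w1 - v1) (w2 - v2)) ->
  (forall s, 0 <= s <= 1 ->
     cnorm2 (fst (picard_lim s) - fst (picard n s)) (snd (picard_lim s) - snd (picard n s)) <= e) ->
  cnorm2 (fst (picard_step_lim t) - fst (picard (S n) t))
         (snd (picard_step_lim t) - snd (picard (S n) t)) <= L * e * t.
Proof.
  intros Ht HL Lip He.
  assert (E : picard_step_lim 0 = picard (S n) 0).
  { rewrite picard_0. unfold picard_step_lim. now rewrite !RIntC_point, !Cplus_0_r. }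
  assert (Dg : has_derive_on (fun s => fst (picard_step_lim s))
                 (fun s => F1 (fst (picard_lim s)) (snd (picard_lim s))) 0 t /\
               has_derive_on (fun s => snd (picard_step_lim s))
                 (fun s => F2 (fst (picard_lim s)) (snd (picard_lim s))) 0 t).
  { split; apply has_derive_on_of_derive; try lra; intros s _; apply is_derive_picard_step_lim. }
  destruct Dg as [Dg1 Dg2]. destruct (has_derive_on_picard n 0 t (proj1 Ht)) as [Dp1 Dp2].
  replace (L * e * t) with (L * e * t - L * e * 0) by ring.
  apply (cnorm2_sub_curves_le _ _ _ _ _ _ _ _ _ _ t (proj1 Ht) (f_equal fst E) (f_equal snd E)
           Dg1 Dg2 Dp1 Dp2 (is_derive_lin _)).
  intros s Hs. eapply Rle_trans; [apply Lip|apply Rmult_le_compat_l; [exact HL|apply He; lra]].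
  - apply (in_ball_of_near _ _ s); [lra|apply picard_lim_near; lra].
  - apply picard_in_ball; lra.
Qed.

Lemma picard_step_lim_eq t : 0 <= t <= 1 -> picard_step_lim t = picard_lim t.
Proof.
  intros Ht. destruct picard_lim_approx as [N HN]. destruct (field_lipschitz r) as [L [HL Lip]].
  assert (H : cnorm2 (fst (picard_step_lim t) - fst (picard_lim t))
                     (snd (picard_step_lim t) - snd (picard_lim t)) <= 0).
  { apply (le_of_le_half_pow _ _ (2 * K * L + 2 * K) N). intros n Hn.
    eapply Rle_trans;
      [apply (cnorm2_sub_triangle _ _ (fst (picard (S n) t)) (snd (picard (S n) t)))|].
    assert (Hclose := picard_step_lim_sub_le n L (2 * K * (1/2) ^ n) t Ht HL Lip).
    assert (Hy := HN (S n) ltac:(lia) t). rewrite clamp_id, cnorm2_sub_sym in Hy by lra.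
    assert (Hh : 0 <= (1/2) ^ n) by (apply pow_le; lra).
    assert (A1 : L * (2 * K * (1/2) ^ n) * t <= 2 * K * L * (1/2) ^ n).
    { replace (2 * K * L * (1/2) ^ n) with (L * (2 * K * (1/2) ^ n) * 1) by ring.
      apply Rmult_le_compat_l; [|lra]. apply Rmult_le_pos; [exact HL|]. apply Rmult_le_pos; lra. }
    assert (A2 : 2 * K * (1/2) ^ S n <= 2 * K * (1/2) ^ n)
      by (apply Rmult_le_compat_l; [lra|apply half_pow_le; lia]).
    enough (cnorm2 (fst (picard_step_lim t) - fst (picard (S n) t))
                   (snd (picard_step_lim t) - snd (picard (S n) t))
              <= L * (2 * K * (1/2) ^ n) * t) by lra.
    apply Hclose. intros s Hs. specialize (HN n Hn s). now rewrite clamp_id in HN. }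
  destruct (cnorm2_sub_le0_eq _ _ _ _ H) as [E1 E2].
  now rewrite (surjective_pairing (picard_step_lim t)), (surjective_pairing (picard_lim t)), E1, E2.
Qed.

Lemma ode_exists : exists g1 g2 : R -> C,
  g1 0 = z1 /\ g2 0 = z2 /\
  (forall t, 0 <= t <= 1 ->
     is_derive g1 t (F1 (g1 t) (g2 t)) /\ is_derive g2 t (F2 (g1 t) (g2 t))) /\
  (forall t, 0 <= t <= 1 -> cnorm2 (g1 t - z1) (g2 t - z2) <= K * t).
Proof.
  exists (fun t => fst (picard_step_lim t)), (fun t => snd (picard_step_lim t)).
  assert (E0 : picard_step_lim 0 = (z1, z2))
    by (unfold picard_step_lim; now rewrite !RIntC_point, !Cplus_0_r).
  rewrite E0. split; [reflexivity|]. split; [reflexivity|]. split.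
  - intros t Ht. rewrite (picard_step_lim_eq t Ht). apply is_derive_picard_step_lim.
  - intros t Ht. rewrite (picard_step_lim_eq t Ht). now apply picard_lim_near.
Qed.

End Picard.

Lemma ode_sol_of_derive (z1 z2 : C) (g1 g2 : R -> C) : g1 0 = z1 -> g2 0 = z2 ->
  (forall t, 0 <= t <= 1 ->
     is_derive g1 t (F1 (g1 t) (g2 t)) /\ is_derive g2 t (F2 (g1 t) (g2 t))) ->
  ode_sol F1 F2 z1 z2 g1 g2.
Proof.
  intros E1 E2 Hd.
  assert (Hc : forall t, 0 <= t <= 1 -> continuous g1 t /\ continuous g2 t).
  { intros t Ht. destruct (Hd t Ht) as [D1 D2].
    split; [apply (ex_derive_continuous g1)|apply (ex_derive_continuous g2)]; eexists; eauto. }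
  destruct (Hc 0 ltac:(lra)) as [C10 C20], (Hc 1 ltac:(lra)) as [C11 C21].
  split; [exact E1|]. split; [exact E2|]. split; [intros t Ht; apply Hd; lra|].
  split; [|split; [|split]];
    (apply filterlim_at_right_of_continuous || apply filterlim_at_left_of_continuous); assumption.
Qed.

End ODE.

(** * Quartic polynomials *)

Lemma in_quartic_idx a1 a2 b1 b2 :
  In (a1, a2, b1, b2) quartic_idx -> (a1 + a2 + b1 + b2 = 4)%nat.
Proof. intros H. apply filter_In in H as [_ H]. now apply Nat.eqb_eq in H. Qed.

Lemma qsumC_swap F : qsumC F = qsumC (fun a1 a2 b1 b2 => F b1 b2 a1 a2).
Proof. unfold qsumC. simpl. ring. Qed.

Lemma qsumR_swap F : qsumR F = qsumR (fun a1 a2 b1 b2 => F b1 b2 a1 a2).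
Proof. unfold qsumR. simpl. ring. Qed.

Lemma qeval_ext (P Q : qpoly) z1 z2 :
  (forall a1 a2 b1 b2, In (a1, a2, b1, b2) quartic_idx -> P a1 a2 b1 b2 = Q a1 a2 b1 b2) ->
  qeval P z1 z2 = qeval Q z1 z2.
Proof. intros H. apply lsumC_ext. intros. now rewrite H. Qed.

Lemma qeval_add (P Q : qpoly) z1 z2 :
  (qeval P z1 z2 + qeval Q z1 z2)%C
  = qeval (fun a1 a2 b1 b2 => P a1 a2 b1 b2 + Q a1 a2 b1 b2)%C z1 z2.
Proof.
  unfold qeval. repeat change (qsumC ?F) with (lsumC quartic_idx F).
  rewrite <- lsumC_add. apply lsumC_ext. intros; ring.
Qed.

Lemma qeval_scal c (P : qpoly) z1 z2 :
  (c * qeval P z1 z2)%C = qeval (fun a1 a2 b1 b2 => c * P a1 a2 b1 b2)%C z1 z2.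
Proof.
  unfold qeval. repeat change (qsumC ?F) with (lsumC quartic_idx F).
  rewrite <- lsumC_scal_l. apply lsumC_ext. intros; ring.
Qed.

Lemma Cconj_qeval P z1 z2 :
  Cconj (qeval P z1 z2) = qeval (fun a1 a2 b1 b2 => Cconj (P b1 b2 a1 a2)) z1 z2.
Proof.
  unfold qeval. rewrite qsumC_swap. change (qsumC ?F) with (lsumC quartic_idx F).
  rewrite Cconj_lsumC. apply lsumC_ext. intros.
  rewrite !Cmult_conj, !Cpow_conj, !Cconj_conj. ring.
Qed.

Lemma Cconj_RtoC (x : R) : Cconj (RtoC x) = RtoC x.
Proof. apply injective_projections; simpl; ring. Qed.

Lemma Cconj_mul_dzb1 P z1 z2 :
  (Cconj z1 * dzb1 P z1 z2)%C = qeval (fun a1 a2 b1 b2 => RtoC (INR b1) * P a1 a2 b1 b2)%C z1 z2.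
Proof.
  unfold dzb1, qeval. repeat change (qsumC ?F) with (lsumC quartic_idx F). rewrite <- lsumC_scal_l.
  apply lsumC_ext. intros a1 a2 b1 b2 _. destruct b1 as [|k]; [simpl; ring|].
  rewrite S_INR, RtoC_plus. replace (S k - 1)%nat with k by lia. simpl. ring.
Qed.

Lemma Cconj_mul_dzb2 P z1 z2 :
  (Cconj z2 * dzb2 P z1 z2)%C = qeval (fun a1 a2 b1 b2 => RtoC (INR b2) * P a1 a2 b1 b2)%C z1 z2.
Proof.
  unfold dzb2, qeval. repeat change (qsumC ?F) with (lsumC quartic_idx F). rewrite <- lsumC_scal_l.
  apply lsumC_ext. intros a1 a2 b1 b2 _. destruct b2 as [|k]; [simpl; ring|].
  rewrite S_INR, RtoC_plus. replace (S k - 1)%nat with k by lia. simpl. ring.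
Qed.

Definition qmod_sym (P : qpoly) : Prop :=
  forall a1 a2 b1 b2, Cmod (P b1 b2 a1 a2) = Cmod (P a1 a2 b1 b2).

Lemma qnorm1_ge0 P : 0 <= qnorm1 P.
Proof. apply lsumR_ge0; intros; apply Rmult_le_pos; [apply pos_INR|apply Cmod_ge_0]. Qed.

Lemma qnorm1_swap P :
  qmod_sym P -> qsumR (fun a1 a2 b1 b2 => INR b1 * Cmod (P a1 a2 b1 b2)) = qnorm1 P.
Proof.
  intros HP. unfold qnorm1. rewrite (qsumR_swap (fun a1 a2 b1 b2 => INR a1 * _)).
  apply lsumR_ext. intros. now rewrite HP.
Qed.

Lemma qnorm2_swap P :
  qmod_sym P -> qsumR (fun a1 a2 b1 b2 => INR b2 * Cmod (P a1 a2 b1 b2)) = qnorm2 P.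
Proof.
  intros HP. unfold qnorm2. rewrite (qsumR_swap (fun a1 a2 b1 b2 => INR a2 * _)).
  apply lsumR_ext. intros. now rewrite HP.
Qed.

Lemma Cmod_monomial_le (c x1 x2 x3 x4 : C) e1 e2 e3 e4 rho :
  Cmod x1 <= rho -> Cmod x2 <= rho -> Cmod x3 <= rho -> Cmod x4 <= rho ->
  Cmod (c * x1 ^ e1 * x2 ^ e2 * x3 ^ e3 * x4 ^ e4) <= Cmod c * rho ^ (e1 + e2 + e3 + e4).
Proof.
  intros H1 H2 H3 H4.
  assert (Hpow : forall (x : C) e, Cmod x <= rho -> 0 <= Cmod (x ^ e) <= rho ^ e).
  { intros x e Hx. rewrite Cmod_pow. split; [apply pow_le, Cmod_ge_0|].
    apply pow_incr. split; [apply Cmod_ge_0|exact Hx]. }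
  pose proof (Hpow x1 e1 H1). pose proof (Hpow x2 e2 H2).
  pose proof (Hpow x3 e3 H3). pose proof (Hpow x4 e4 H4). pose proof (Cmod_ge_0 c).
  rewrite !Cmod_mult, !pow_add, !Rmult_assoc.
  apply Rmult_le_compat_l; auto.
  repeat apply Rmult_le_compat; try apply Rmult_le_pos; try apply Rmult_le_pos; tauto.
Qed.

(* If [k = 0] the exponent [k - 1] in a Wirtinger derivative truncates to [0], so the degree is
   not 3; the weight [INR k] then kills the term. *)
Lemma Cmod_dterm_le (c : C) (k : nat) (x1 x2 x3 x4 : C) e1 e2 e3 e4 rho :
  Cmod x1 <= rho -> Cmod x2 <= rho -> Cmod x3 <= rho -> Cmod x4 <= rho ->
  (k = 0 \/ e1 + e2 + e3 + e4 = 3)%nat ->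
  Cmod (c * RtoC (INR k) * x1 ^ e1 * x2 ^ e2 * x3 ^ e3 * x4 ^ e4) <= INR k * Cmod c * rho ^ 3.
Proof.
  intros H1 H2 H3 H4 Hk.
  eapply Rle_trans; [apply Cmod_monomial_le; eauto|].
  rewrite Cmod_mult, Cmod_R, Rabs_right by (apply Rle_ge, pos_INR).
  destruct Hk as [-> | ->]; simpl; lra.
Qed.

Lemma Cmod_qsumC_le F w rho :
  (forall a1 a2 b1 b2, (a1 + a2 + b1 + b2 = 4)%nat ->
     Cmod (F a1 a2 b1 b2) <= w a1 a2 b1 b2 * rho ^ 3) ->
  Cmod (qsumC F) <= qsumR w * rho ^ 3.
Proof.
  intros H. change (qsumR w) with (lsumR quartic_idx w).
  rewrite <- lsumR_scal_r. eapply Rle_trans; [apply Cmod_lsumC_le|].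
  apply lsumR_le. intros a1 a2 b1 b2 Hin. apply H, in_quartic_idx, Hin.
Qed.

Section DerivativeBounds.

Variables (P : qpoly) (z1 z2 : C) (rho : R).
Hypothesis Hz : cnorm2 z1 z2 <= rho.

Let Hz1 : Cmod z1 <= rho.
Proof. eapply Rle_trans; [apply cnorm2_le_l|exact Hz]. Qed.

Let Hz2 : Cmod z2 <= rho.
Proof. eapply Rle_trans; [apply cnorm2_le_r|exact Hz]. Qed.

Let Hzb1 : Cmod (Cconj z1) <= rho.
Proof. now rewrite Cmod_conj. Qed.

Let Hzb2 : Cmod (Cconj z2) <= rho.
Proof. now rewrite Cmod_conj. Qed.

Lemma Cmod_dz1_le : Cmod (dz1 P z1 z2) <= qnorm1 P * rho ^ 3.
Proof.
  apply Cmod_qsumC_le; intros a1 a2 b1 b2 H4.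
  apply Cmod_dterm_le; auto; lia.
Qed.

Lemma Cmod_dz2_le : Cmod (dz2 P z1 z2) <= qnorm2 P * rho ^ 3.
Proof. apply Cmod_qsumC_le; intros a1 a2 b1 b2 H4. apply Cmod_dterm_le; auto; lia. Qed.

Hypothesis HP : qmod_sym P.

Lemma Cmod_dzb1_le : Cmod (dzb1 P z1 z2) <= qnorm1 P * rho ^ 3.
Proof.
  rewrite <- (qnorm1_swap P HP).
  apply Cmod_qsumC_le; intros a1 a2 b1 b2 H4. apply Cmod_dterm_le; auto; lia.
Qed.

Lemma Cmod_dzb2_le : Cmod (dzb2 P z1 z2) <= qnorm2 P * rho ^ 3.
Proof.
  rewrite <- (qnorm2_swap P HP).
  apply Cmod_qsumC_le; intros a1 a2 b1 b2 H4. apply Cmod_dterm_le; auto; lia.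
Qed.

Lemma gradnorm_le : gradnorm P z1 z2 <= qstar P * rho ^ 3.
Proof.
  assert (Hr : 0 <= rho ^ 3)
    by (apply pow_le, Rle_trans with (cnorm2 z1 z2); auto using cnorm2_ge0).
  assert (H1 : qnorm1 P * rho ^ 3 <= qstar P * rho ^ 3) by (apply Rmult_le_compat_r, Rmax_l; auto).
  assert (H2 : qnorm2 P * rho ^ 3 <= qstar P * rho ^ 3) by (apply Rmult_le_compat_r, Rmax_r; auto).
  pose proof Cmod_dz1_le. pose proof Cmod_dz2_le. pose proof Cmod_dzb1_le. pose proof Cmod_dzb2_le.
  unfold gradnorm. repeat apply Rmax_lub; lra.
Qed.

End DerivativeBounds.

Ltac solve_loc_lipschitz_monomial :=
  repeat first [ apply loc_lipschitz_mul | apply loc_lipschitz_pow | apply loc_lipschitz_conj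
               | apply loc_lipschitz_fst | apply loc_lipschitz_snd | apply loc_lipschitz_const ].

Lemma loc_lipschitz_dzb1 P : loc_lipschitz (dzb1 P).
Proof.
  apply (loc_lipschitz_lsumC quartic_idx (fun a1 a2 b1 b2 z1 z2 => _)).
  intros. solve_loc_lipschitz_monomial.
Qed.

Lemma loc_lipschitz_dzb2 P : loc_lipschitz (dzb2 P).
Proof.
  apply (loc_lipschitz_lsumC quartic_idx (fun a1 a2 b1 b2 z1 z2 => _)).
  intros. solve_loc_lipschitz_monomial.
Qed.

Lemma is_derive_lsumC l (F : nat -> nat -> nat -> nat -> R -> C)
  (D : nat -> nat -> nat -> nat -> C) t :
  (forall a1 a2 b1 b2, is_derive (F a1 a2 b1 b2) t (D a1 a2 b1 b2)) ->
  is_derive (fun s => lsumC l (fun a1 a2 b1 b2 => F a1 a2 b1 b2 s)) t (lsumC l D).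
Proof.
  intros H. induction l as [|[[[a1 a2] b1] b2] l IH].
  - exact (is_derive_Cconst (RtoC 0) t).
  - exact (is_derive_plus _ _ _ _ _ (H a1 a2 b1 b2) IH).
Qed.

Lemma is_derive_monomial (c : C) (g1 g2 : R -> C) t d1 d2 a1 a2 b1 b2 :
  is_derive g1 t d1 -> is_derive g2 t d2 ->
  is_derive (fun s => c * g1 s ^ a1 * g2 s ^ a2 * Cconj (g1 s) ^ b1 * Cconj (g2 s) ^ b2)%C t
   ((c * RtoC (INR a1) * g1 t ^ (a1 - 1) * g2 t ^ a2 * Cconj (g1 t) ^ b1 * Cconj (g2 t) ^ b2) * d1
  + (c * RtoC (INR a2) * g1 t ^ a1 * g2 t ^ (a2 - 1) * Cconj (g1 t) ^ b1 * Cconj (g2 t) ^ b2) * d2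
  + (c * RtoC (INR b1) * g1 t ^ a1 * g2 t ^ a2 * Cconj (g1 t) ^ (b1 - 1) * Cconj (g2 t) ^ b2)
      * Cconj d1
  + (c * RtoC (INR b2) * g1 t ^ a1 * g2 t ^ a2 * Cconj (g1 t) ^ b1 * Cconj (g2 t) ^ (b2 - 1))
      * Cconj d2)%C.
Proof.
  intros H1 H2.
  pose proof (is_derive_Cpow _ _ _ a1 H1) as P1. pose proof (is_derive_Cpow _ _ _ a2 H2) as P2.
  pose proof (is_derive_Cpow _ _ _ b1 (is_derive_Cconj _ _ _ H1)) as P3.
  pose proof (is_derive_Cpow _ _ _ b2 (is_derive_Cconj _ _ _ H2)) as P4.
  eapply is_derive_Ceq.
  - exact (is_derive_Cmult _ _ _ _ _ (is_derive_Cmult _ _ _ _ _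
             (is_derive_Cmult _ _ _ _ _ (is_derive_Cscal c _ _ _ P1) P2) P3) P4).
  - cbv beta. ring.
Qed.

Lemma is_derive_qeval P (g1 g2 : R -> C) t d1 d2 :
  is_derive g1 t d1 -> is_derive g2 t d2 ->
  is_derive (fun s => qeval P (g1 s) (g2 s)) t
    (dz1 P (g1 t) (g2 t) * d1 + dz2 P (g1 t) (g2 t) * d2
     + dzb1 P (g1 t) (g2 t) * Cconj d1 + dzb2 P (g1 t) (g2 t) * Cconj d2)%C.
Proof.
  intros H1 H2. eapply is_derive_Ceq.
  - apply (is_derive_lsumC quartic_idx (fun a1 a2 b1 b2 s =>
             P a1 a2 b1 b2 * g1 s ^ a1 * g2 s ^ a2 * Cconj (g1 s) ^ b1 * Cconj (g2 s) ^ b2)%C).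
    intros a1 a2 b1 b2. apply (is_derive_monomial _ g1 g2 t d1 d2); auto.
  - unfold dz1, dz2, dzb1, dzb2. repeat change (qsumC ?F) with (lsumC quartic_idx F).
    now rewrite <- !lsumC_scal_r, <- !lsumC_add.
Qed.

Lemma is_derive_Nfun wm wp (g1 g2 : R -> C) t d1 d2 :
  is_derive g1 t d1 -> is_derive g2 t d2 ->
  is_derive (fun s => Nfun wm wp (g1 s) (g2 s)) t
    (RtoC wm * (d1 * Cconj (g1 t) + g1 t * Cconj d1)
     + RtoC wp * (d2 * Cconj (g2 t) + g2 t * Cconj d2))%C.
Proof.
  intros H1 H2.
  apply (is_derive_ext
    (fun s => RtoC wm * (g1 s * Cconj (g1 s)) + RtoC wp * (g2 s * Cconj (g2 s)))%C).
  { intros s. unfold Nfun. rewrite RtoC_plus, !RtoC_mult, !Cmod2_conj. reflexivity. }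
  exact (is_derive_plus _ _ _ _ _
           (is_derive_Cscal _ _ _ _ (is_derive_Cmult _ _ _ _ _ H1 (is_derive_Cconj _ _ _ H1)))
           (is_derive_Cscal _ _ _ _ (is_derive_Cmult _ _ _ _ _ H2 (is_derive_Cconj _ _ _ H2)))).
Qed.

(** * The normal form *)

Section Coefficients.

Variables (Phi : mat2) (wm wp M3 N3 : R).

Local Notation G := (Gc Phi wm wp M3 N3).
Local Notation S := (Sc Phi wm wp M3 N3).
Local Notation H4 := (H4bar Phi wm wp M3 N3).
Local Notation Gh := (Ghat Phi wm wp M3 N3).

Lemma Gc_swap a1 a2 b1 b2 : G b1 b2 a1 a2 = G a1 a2 b1 b2.
Proof.
  unfold Gc, multinom4. rewrite (Nat.add_comm b1 a1), (Nat.add_comm b2 a2).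
  now replace (fact b1 * fact b2 * fact a1 * fact a2)%nat
    with (fact a1 * fact a2 * fact b1 * fact b2)%nat by ring.
Qed.

Lemma H4bar_swap a1 a2 b1 b2 : H4 b1 b2 a1 a2 = H4 a1 a2 b1 b2.
Proof. unfold H4bar. now rewrite (Nat.eqb_sym b1 a1), (Nat.eqb_sym b2 a2), Gc_swap. Qed.

Lemma Ghat_swap a1 a2 b1 b2 : Gh b1 b2 a1 a2 = Gh a1 a2 b1 b2.
Proof. unfold Ghat. now rewrite H4bar_swap, Gc_swap. Qed.

(* This holds even for resonant indices, where [Cinv 0 = 0] makes both sides vanish. *)
Lemma Cconj_Sc_swap a1 a2 b1 b2 : Cconj (S b1 b2 a1 a2) = S a1 a2 b1 b2.
Proof.
  unfold Sc. rewrite (Nat.eqb_sym b1 a1), (Nat.eqb_sym b2 a2), Gc_swap.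
  destruct (Nat.eqb a1 b1 && Nat.eqb a2 b2)%bool.
  - apply injective_projections; simpl; lra.
  - unfold Gc. set (g := multinom4 _ _ _ _ * _).
    replace (wdot wm wp b1 b2 a1 a2) with (- wdot wm wp a1 a2 b1 b2) by (unfold wdot; ring).
    set (w := wdot wm wp a1 a2 b1 b2).
    unfold Cconj, Cdiv, Cinv, Cmult, RtoC, Ci; simpl.
    destruct (Req_dec w 0) as [->|Hw].
    + rewrite Ropp_0. apply injective_projections; simpl; unfold Rdiv;
        replace (0 * 0 + 0 * 0) with 0 by ring; rewrite ?Rinv_0; ring.
    + apply injective_projections; simpl; field; auto.
Qed.

Lemma qmod_sym_Sc : qmod_sym S.
Proof. intros a1 a2 b1 b2. now rewrite <- Cconj_Sc_swap, Cmod_conj. Qed.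

Lemma qmod_sym_H4bar : qmod_sym H4.
Proof. intros a1 a2 b1 b2. now rewrite H4bar_swap. Qed.

Lemma qmod_sym_Ghat : qmod_sym Gh.
Proof. intros a1 a2 b1 b2. now rewrite Ghat_swap. Qed.

End Coefficients.

Definition ham1 (S : qpoly) (z1 z2 : C) : C := (- Ci * dzb1 S z1 z2)%C.

Definition ham2 (S : qpoly) (z1 z2 : C) : C := (- Ci * dzb2 S z1 z2)%C.

Lemma loc_lipschitz_ham1 S : loc_lipschitz (ham1 S).
Proof. exact (loc_lipschitz_mul _ _ (loc_lipschitz_const (- Ci)%C) (loc_lipschitz_dzb1 S)). Qed.

Lemma loc_lipschitz_ham2 S : loc_lipschitz (ham2 S).
Proof. exact (loc_lipschitz_mul _ _ (loc_lipschitz_const (- Ci)%C) (loc_lipschitz_dzb2 S)). Qed.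

Lemma Cmod_ham1 S z1 z2 : Cmod (ham1 S z1 z2) = Cmod (dzb1 S z1 z2).
Proof. unfold ham1. rewrite Cmod_mult, Cmod_opp, Cmod_Ci. ring. Qed.

Lemma Cmod_ham2 S z1 z2 : Cmod (ham2 S z1 z2) = Cmod (dzb2 S z1 z2).
Proof. unfold ham2. rewrite Cmod_mult, Cmod_opp, Cmod_Ci. ring. Qed.

Lemma cnorm2_ham_le S z1 z2 rho : qmod_sym S -> cnorm2 z1 z2 <= rho ->
  cnorm2 (ham1 S z1 z2) (ham2 S z1 z2) <= qstar S * rho ^ 3.
Proof.
  intros HS Hz.
  assert (Hr : 0 <= rho ^ 3)
    by (apply pow_le, Rle_trans with (cnorm2 z1 z2); auto using cnorm2_ge0).
  apply cnorm2_lub; [rewrite Cmod_ham1|rewrite Cmod_ham2].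
  - eapply Rle_trans; [apply (Cmod_dzb1_le S z1 z2 rho Hz HS)|].
    apply Rmult_le_compat_r; [exact Hr|apply Rmax_l].
  - eapply Rle_trans; [apply (Cmod_dzb2_le S z1 z2 rho Hz HS)|].
    apply Rmult_le_compat_r; [exact Hr|apply Rmax_r].
Qed.

Definition lie_deriv (P S : qpoly) (z1 z2 : C) : C :=
  (dz1 P z1 z2 * ham1 S z1 z2 + dz2 P z1 z2 * ham2 S z1 z2
   + dzb1 P z1 z2 * Cconj (ham1 S z1 z2) + dzb2 P z1 z2 * Cconj (ham2 S z1 z2))%C.

Lemma Cmod_lie_deriv_le P S z1 z2 rho : qmod_sym P -> qmod_sym S -> cnorm2 z1 z2 <= rho ->
  Cmod (lie_deriv P S z1 z2) <= 2 * (qnorm1 P * qnorm1 S + qnorm2 P * qnorm2 S) * rho ^ 6.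
Proof.
  intros HP HS Hz. unfold lie_deriv.
  assert (Hh1 : Cmod (ham1 S z1 z2) <= qnorm1 S * rho ^ 3)
    by (rewrite Cmod_ham1; apply Cmod_dzb1_le; auto).
  assert (Hh2 : Cmod (ham2 S z1 z2) <= qnorm2 S * rho ^ 3)
    by (rewrite Cmod_ham2; apply Cmod_dzb2_le; auto).
  assert (Hc1 : Cmod (Cconj (ham1 S z1 z2)) <= qnorm1 S * rho ^ 3) by now rewrite Cmod_conj.
  assert (Hc2 : Cmod (Cconj (ham2 S z1 z2)) <= qnorm2 S * rho ^ 3) by now rewrite Cmod_conj.
  pose proof (Cmod_mult_le _ _ _ _ (Cmod_dz1_le P z1 z2 rho Hz) Hh1).
  pose proof (Cmod_mult_le _ _ _ _ (Cmod_dz2_le P z1 z2 rho Hz) Hh2).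
  pose proof (Cmod_mult_le _ _ _ _ (Cmod_dzb1_le P z1 z2 rho Hz HP) Hc1).
  pose proof (Cmod_mult_le _ _ _ _ (Cmod_dzb2_le P z1 z2 rho Hz HP) Hc2).
  eapply Rle_trans; [apply Cmod_triangle|].
  eapply Rle_trans; [apply Rplus_le_compat_r, Cmod_triangle|].
  eapply Rle_trans; [apply Rplus_le_compat_r, Rplus_le_compat_r, Cmod_triangle|].
  replace (2 * (qnorm1 P * qnorm1 S + qnorm2 P * qnorm2 S) * rho ^ 6)
    with (2 * (qnorm1 P * rho ^ 3 * (qnorm1 S * rho ^ 3))
          + 2 * (qnorm2 P * rho ^ 3 * (qnorm2 S * rho ^ 3)))
    by ring.
  lra.
Qed.

Section NormalForm.

Variables (Phi : mat2) (wm wp M3 N3 : R).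
Hypotheses (Hwm : 0 < wm) (Hwmp : wm < wp) (Hnonres : wp <> 3 * wm).

Local Notation S := (Sc Phi wm wp M3 N3).
Local Notation H4 := (H4bar Phi wm wp M3 N3).
Local Notation Gh := (Ghat Phi wm wp M3 N3).

(* Off the diagonal, [omega . (alpha - beta)] vanishes on quartic indices only if [wp = 3 wm],
   e.g. for [alpha = (3,0)], [beta = (0,1)]. *)
Lemma wdot_neq0 a1 a2 b1 b2 : In (a1, a2, b1, b2) quartic_idx ->
  (Nat.eqb a1 b1 && Nat.eqb a2 b2)%bool = false -> wdot wm wp a1 a2 b1 b2 <> 0.
Proof.
  intros Hin E. unfold quartic_idx in Hin. simpl in Hin.
  repeat (destruct Hin as [Hin|Hin]; [injection Hin; intros; subst; simpl in E;
     try discriminate; unfold wdot; simpl INR; intro Hc; first [lra | apply Hnonres; lra] |]).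
  destruct Hin.
Qed.

Lemma Sc_homological a1 a2 b1 b2 : In (a1, a2, b1, b2) quartic_idx ->
  (Ci * RtoC (wdot wm wp a1 a2 b1 b2) * S a1 a2 b1 b2)%C = (- Gh a1 a2 b1 b2)%C.
Proof.
  intros Hin. unfold Sc, Ghat, H4bar.
  destruct (Nat.eqb a1 b1 && Nat.eqb a2 b2)%bool eqn:E; [ring|].
  assert (W : RtoC (wdot wm wp a1 a2 b1 b2) <> RtoC 0).
  { intros Hc. apply (wdot_neq0 a1 a2 b1 b2 Hin E). now injection Hc. }
  replace (- (Gc Phi wm wp M3 N3 a1 a2 b1 b2 - 0))%C
    with ((Ci * Ci) * Gc Phi wm wp M3 N3 a1 a2 b1 b2)%C
    by (replace (Ci * Ci)%C with (- RtoC 1)%C by (apply injective_projections; simpl; ring); ring).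
  field. exact W.
Qed.

Lemma z_mul_Cconj_dzb1 z1 z2 :
  (z1 * Cconj (dzb1 S z1 z2))%C = qeval (fun a1 a2 b1 b2 => RtoC (INR a1) * S a1 a2 b1 b2)%C z1 z2.
Proof.
  rewrite <- (Cconj_conj z1) at 1. rewrite <- Cmult_conj, Cconj_mul_dzb1, Cconj_qeval.
  apply qeval_ext. intros. now rewrite Cmult_conj, Cconj_Sc_swap, Cconj_RtoC.
Qed.

Lemma z_mul_Cconj_dzb2 z1 z2 :
  (z2 * Cconj (dzb2 S z1 z2))%C = qeval (fun a1 a2 b1 b2 => RtoC (INR a2) * S a1 a2 b1 b2)%C z1 z2.
Proof.
  rewrite <- (Cconj_conj z2) at 1. rewrite <- Cmult_conj, Cconj_mul_dzb2, Cconj_qeval.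
  apply qeval_ext. intros. now rewrite Cmult_conj, Cconj_Sc_swap, Cconj_RtoC.
Qed.

Lemma homological_eq z1 z2 :
  (RtoC wm * (ham1 S z1 z2 * Cconj z1 + z1 * Cconj (ham1 S z1 z2))
   + RtoC wp * (ham2 S z1 z2 * Cconj z2 + z2 * Cconj (ham2 S z1 z2)))%C = (- qeval Gh z1 z2)%C.
Proof.
  unfold ham1, ham2. rewrite !Cmult_conj.
  replace (Cconj (- Ci)) with Ci by (apply injective_projections; simpl; ring).
  replace (RtoC wm * (- Ci * dzb1 S z1 z2 * Cconj z1 + z1 * (Ci * Cconj (dzb1 S z1 z2)))
           + RtoC wp * (- Ci * dzb2 S z1 z2 * Cconj z2 + z2 * (Ci * Cconj (dzb2 S z1 z2))))%C
    with (RtoC wm * - Ci * (Cconj z1 * dzb1 S z1 z2) + RtoC wm * Ci * (z1 * Cconj (dzb1 S z1 z2))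
          + (RtoC wp * - Ci * (Cconj z2 * dzb2 S z1 z2)
             + RtoC wp * Ci * (z2 * Cconj (dzb2 S z1 z2))))%C
    by ring.
  rewrite Cconj_mul_dzb1, Cconj_mul_dzb2, z_mul_Cconj_dzb1, z_mul_Cconj_dzb2.
  replace (- qeval Gh z1 z2)%C with (- RtoC 1 * qeval Gh z1 z2)%C by ring.
  rewrite !qeval_scal, !qeval_add.
  apply qeval_ext. intros a1 a2 b1 b2 Hin.
  replace (- RtoC 1 * Gh a1 a2 b1 b2)%C with (- Gh a1 a2 b1 b2)%C by ring.
  rewrite <- (Sc_homological a1 a2 b1 b2 Hin).
  unfold wdot. rewrite RtoC_plus, !RtoC_mult, !RtoC_minus. ring.
Qed.

Lemma is_derive_interpolation (g1 g2 : R -> C) t :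
  is_derive g1 t (ham1 S (g1 t) (g2 t)) -> is_derive g2 t (ham2 S (g1 t) (g2 t)) ->
  is_derive (fun s => Nfun wm wp (g1 s) (g2 s) + qeval H4 (g1 s) (g2 s)
                      + RtoC s * qeval Gh (g1 s) (g2 s))%C t
    (lie_deriv H4 S (g1 t) (g2 t) + RtoC t * lie_deriv Gh S (g1 t) (g2 t))%C.
Proof.
  intros D1 D2. eapply is_derive_Ceq.
  - exact (is_derive_Cplus _ _ _ _ _
             (is_derive_Cplus _ _ _ _ _ (is_derive_Nfun wm wp g1 g2 t _ _ D1 D2)
                (is_derive_qeval H4 g1 g2 t _ _ D1 D2))
             (is_derive_Cmult _ _ _ _ _ (is_derive_RtoC_id t)
                (is_derive_qeval Gh g1 g2 t _ _ D1 D2))).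
  - rewrite homological_eq. unfold lie_deriv. ring.
Qed.

Lemma Cmod_remainder_le z1 z2 (g1 g2 : R -> C) r :
  g1 0 = z1 -> g2 0 = z2 ->
  (forall t, 0 <= t <= 1 ->
     is_derive g1 t (ham1 S (g1 t) (g2 t)) /\ is_derive g2 t (ham2 S (g1 t) (g2 t))) ->
  (forall t, 0 <= t <= 1 -> cnorm2 (g1 t) (g2 t) <= r) ->
  Cmod (Hfun Phi wm wp M3 N3 (g1 1) (g2 1) - Nfun wm wp z1 z2 - qeval H4 z1 z2)%C
    <= (qnorm1 S * (2 * qnorm1 H4 + qnorm1 Gh) + qnorm2 S * (2 * qnorm2 H4 + qnorm2 Gh)) * r ^ 6.
Proof.
  intros E1 E2 Hd Hr.
  set (A := 2 * (qnorm1 H4 * qnorm1 S + qnorm2 H4 * qnorm2 S) * r ^ 6).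
  set (B := 2 * (qnorm1 Gh * qnorm1 S + qnorm2 Gh * qnorm2 S) * r ^ 6).
  set (psi := fun t => (Nfun wm wp (g1 t) (g2 t) + qeval H4 (g1 t) (g2 t)
                        + RtoC t * qeval Gh (g1 t) (g2 t))%C).
  assert (Hends : (psi 1 - psi 0)%C
                  = (Hfun Phi wm wp M3 N3 (g1 1) (g2 1) - Nfun wm wp z1 z2 - qeval H4 z1 z2)%C).
  { unfold psi, Hfun. rewrite E1, E2, Gfun_expansion by lra.
    replace (qeval (Gc Phi wm wp M3 N3) (g1 1) (g2 1))
      with (qeval H4 (g1 1) (g2 1) + qeval Gh (g1 1) (g2 1))%C
      by (rewrite qeval_add; apply qeval_ext; intros; unfold Ghat; ring).
    rewrite Cmult_1_l, Cmult_0_l. ring. }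
  rewrite <- Hends.
  replace ((qnorm1 S * (2 * qnorm1 H4 + qnorm1 Gh)
            + qnorm2 S * (2 * qnorm2 H4 + qnorm2 Gh)) * r ^ 6)
    with ((A * 1 + B / 2 * 1 ^ 2) - (A * 0 + B / 2 * 0 ^ 2)) by (unfold A, B; field).
  apply (Cmod_sub_le_of_derive psi
           (fun t => lie_deriv H4 S (g1 t) (g2 t) + RtoC t * lie_deriv Gh S (g1 t) (g2 t))%C
           (fun t => A * t + B / 2 * t ^ 2) (fun t => A + B * t)); [lra| | |].
  - apply has_derive_on_of_derive; [lra|]. intros t Ht. destruct (Hd t Ht).
    now apply is_derive_interpolation.
  - intros t. auto_derive; auto. field.
  - intros t Ht. eapply Rle_trans; [apply Cmod_triangle|].
    rewrite Cmod_mult, Cmod_R, Rabs_right by lra.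
    pose proof (Cmod_lie_deriv_le H4 S _ _ r (qmod_sym_H4bar Phi wm wp M3 N3)
                  (qmod_sym_Sc Phi wm wp M3 N3) (Hr t ltac:(lra))) as HA.
    pose proof (Cmod_lie_deriv_le Gh S _ _ r (qmod_sym_Ghat Phi wm wp M3 N3)
                  (qmod_sym_Sc Phi wm wp M3 N3) (Hr t ltac:(lra))) as HB.
    fold A in HA. fold B in HB.
    assert (t * Cmod (lie_deriv Gh S (g1 t) (g2 t)) <= t * B) by (apply Rmult_le_compat_l; lra).
    lra.
Qed.

End NormalForm.

Theorem corollary4p4 (Mm Km Phi : mat2) (wm wp M3 N3 r delta : R) :
  (* M symmetric positive definite, K diagonal positive definite *)
  symmetric2 Mm -> posdef2 Mm -> diagonal2 Km -> posdef2 Km ->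
  (* omega_-^2 < omega_+^2 are the eigenvalues of M^{-1} K, 0 < omega_- < omega_+ *)
  0 < wm -> wm < wp ->
  (forall lam, eigenvalue2 (mmul (inv2 Mm) Km) lam <-> lam = wm ^ 2 \/ lam = wp ^ 2) ->
  (* Phi^T M Phi = I, Phi^T K Phi = diag(omega_-^2, omega_+^2) *)
  meq (mmul (mtr Phi) (mmul Mm Phi)) (mdiag 1 1) ->
  meq (mmul (mtr Phi) (mmul Km Phi)) (mdiag (wm ^ 2) (wp ^ 2)) ->
  wp <> 3 * wm ->
  0 < r -> 0 < delta < 1 ->
  r ^ 2 * qstar (Sc Phi wm wp M3 N3) <= 1 - delta ->
  (forall z1 z2 : C, cnorm2 z1 z2 <= r ->
     gradnorm (Sc Phi wm wp M3 N3) z1 z2 <= (1 - delta) * r) /\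
  (forall z1 z2 : C, cnorm2 z1 z2 <= delta * r ->
     exists g1 g2 : R -> C,
       flow_sol (Sc Phi wm wp M3 N3) z1 z2 g1 g2 /\
       (forall h1 h2 : R -> C, flow_sol (Sc Phi wm wp M3 N3) z1 z2 h1 h2 ->
          h1 1 = g1 1 /\ h2 1 = g2 1) /\
       cnorm2 (g1 1) (g2 1) <= r /\
       cnorm2 (g1 1 - z1)%C (g2 1 - z2)%C <= r ^ 3 * qstar (Sc Phi wm wp M3 N3) /\
       Cmod (Hfun Phi wm wp M3 N3 (g1 1) (g2 1) - Nfun wm wp z1 z2
             - qeval (H4bar Phi wm wp M3 N3) z1 z2)%C
         <= (qnorm1 (Sc Phi wm wp M3 N3)
               * (2 * qnorm1 (H4bar Phi wm wp M3 N3) + qnorm1 (Ghat Phi wm wp M3 N3))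
             + qnorm2 (Sc Phi wm wp M3 N3)
               * (2 * qnorm2 (H4bar Phi wm wp M3 N3) + qnorm2 (Ghat Phi wm wp M3 N3)))
            * r ^ 6).
Proof.
  (* The matrix hypotheses only give [wm], [wp] and [Phi] their meaning; the estimates use
     nothing but [0 < wm < wp]. *)
  intros _ _ _ _ Hwm Hwmp _ _ _ Hnonres Hr Hdelta Hstar.
  set (S := Sc Phi wm wp M3 N3) in *. set (K := r ^ 3 * qstar S).
  assert (HK : 0 <= K).
  { apply Rmult_le_pos; [apply pow_le; lra|exact (Rle_trans _ _ _ (qnorm1_ge0 S) (Rmax_l _ _))]. }
  assert (HKr : K <= (1 - delta) * r) by (unfold K; simpl; nra).
  split.
  { intros z1 z2 Hz. pose proof (gradnorm_le S z1 z2 r Hz (qmod_sym_Sc _ _ _ _ _)).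
    unfold K in HKr. lra. }
  intros z1 z2 Hz.
  assert (Hball : cnorm2 z1 z2 + K <= r) by nra.
  assert (HFK : forall w1 w2, cnorm2 w1 w2 <= r -> cnorm2 (ham1 S w1 w2) (ham2 S w1 w2) <= K).
  { intros w1 w2 Hw. unfold K. rewrite Rmult_comm.
    exact (cnorm2_ham_le S w1 w2 r (qmod_sym_Sc _ _ _ _ _) Hw). }
  destruct (ode_exists _ _ (loc_lipschitz_ham1 S) (loc_lipschitz_ham2 S) z1 z2 r K HK Hball HFK)
    as (g1 & g2 & E1 & E2 & Hd & Hnear).
  assert (Hin : forall t, 0 <= t <= 1 -> cnorm2 (g1 t) (g2 t) <= r)
    by (intros t Ht; exact (in_ball_of_near z1 z2 r K HK Hball _ _ t Ht (Hnear t Ht))).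
  assert (Hsol : ode_sol (ham1 S) (ham2 S) z1 z2 g1 g2)
    by exact (ode_sol_of_derive _ _ _ _ _ _ E1 E2 Hd).
  exists g1, g2. split; [exact Hsol|]. split.
  { intros h1 h2 Hh. exact (ode_sol_unique _ _ (loc_lipschitz_ham1 S) (loc_lipschitz_ham2 S)
                              _ _ _ _ _ _ Hsol Hh 1 ltac:(lra)). }
  split; [apply Hin; lra|]. split; [rewrite <- (Rmult_1_r K); apply Hnear; lra|].
  exact (Cmod_remainder_le Phi wm wp M3 N3 Hwm Hwmp Hnonres z1 z2 g1 g2 r E1 E2 Hd Hin).
Qed.
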